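(* Let $a<b$ and let $X=(X_1,\dots,X_n)$ have coordinates taking values in finite subsets of $[a,b]$ and satisfy a $\mathfrak{d}$-LSI$(\sigma^2)$. Let $(\mathcal{B},\|\cdot\|)$ be a Banach space with dual unit ball $\mathcal{B}_1^*$, $\mathcal{T}$ a compact set of families $t=(t_{ij})_{1\le i<j\le n}$ in $\mathcal{B}$ (extended by $t_{ji}=t_{ij}$, $t_{ii}=0$), and $f_{\mathcal{T}}(X)=\sup_{t\in\mathcal{T}}\|\sum_{i<j}X_iX_jt_{ij}\|$. Put $T_1=\mathbb{E}\sup_{t\in\mathcal{T}}\sup_{v^*\in\mathcal{B}_1^*}\big(\sum_{i=1}^n(\sum_{j=1}^nX_jv^*(t_{ij}))^2\big)^{1/2}$ and $T_2=\sup_{t\in\mathcal{T}}\sup_{v^*\in\mathcal{B}_1^*}|(v^*(t_{ij}))_{i,j}|_{\mathrm{op}}$. Then for all $t\ge0$, \[ \mathbb{P}\big(f_{\mathcal{T}}(X)-\mathbb{E}f_{\mathcal{T}}(X)\ge t\big)\le2\exp\Big(-\frac{1}{60(b-a)^2\sigma^2}\min\Big(\frac{t^2}{T_1^2},\frac{t}{T_2}\Big)\Big). \]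
   Context: $\mathfrak{d}$-LSI$(\sigma^2)$: with $\mu$ the law of $X$, $\mathfrak{d}_iF(x)^2=\mathrm{Var}_{\mu(\cdot\mid x_{i^c})}(F(x_{i^c},\cdot))$ (variance under the conditional law of $X_i$ given the other coordinates), $|\mathfrak{d}F|^2=\sum_i\mathfrak{d}_iF^2$, and $\mathrm{Ent}_\mu(F^2)\le2\sigma^2\int|\mathfrak{d}F|^2d\mu$ for all $F$, where $\mathrm{Ent}_\mu(h)=\int h\log h\,d\mu-\int h\,d\mu\log\int h\,d\mu$. $|M|_{\mathrm{op}}$ is the operator norm of a real matrix. *)

From Stdlib Require Import Reals Lra List Classical ClassicalEpsilon.
Import ListNotations.
Open Scope R_scope.

Definition fsum (n : nat) (f : nat -> R) : R :=
  fold_right Rplus 0 (map f (seq 0 n)).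

(* least upper bound of E when it exists (unique), 0 otherwise *)
Definition Rsup (E : R -> Prop) : R :=
  match excluded_middle_informative (exists l, is_lub E l) with
  | left h => proj1_sig (constructive_indefinite_description _ h)
  | right _ => 0
  end.

(* A law on R^n with finite support, given as a list of atoms (point, mass).
   Points are maps nat -> R; only coordinates 0..n-1 are meaningful. *)
Definition law := list ((nat -> R) * R).

Definition is_prob (mu : law) : Prop :=
  (forall xp, In xp mu -> 0 <= snd xp) /\
  fold_right Rplus 0 (map snd mu) = 1.

Definition Ex (mu : law) (F : (nat -> R) -> R) : R :=
  fold_right Rplus 0 (map (fun xp => snd xp * F (fst xp)) mu).

Definition Pr (mu : law) (P : (nat -> R) -> Prop) : R :=
  fold_right Rplus 0
    (map (fun xp => if excluded_middle_informative (P (fst xp)) then snd xp else 0) mu).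

(* truncation of a point to its first n coordinates (so functions of it are functions on R^n) *)
Definition trunc (n : nat) (x : nat -> R) : nat -> R :=
  fun k => if Nat.ltb k n then x k else 0.

Definition upd (x : nat -> R) (i : nat) (r : R) : nat -> R :=
  fun k => if Nat.eqb k i then r else x k.

Definition agree_off (n i : nat) (x y : nat -> R) : bool :=
  forallb (fun j => orb (Nat.eqb j i)
                    (if Req_EM_T (x j) (y j) then true else false)) (seq 0 n).

(* conditional law of X_i given X_{i^c} = x_{i^c}: atoms agreeing with x off i *)
Definition cond_atoms (mu : law) (n i : nat) (x : nat -> R) : law :=
  filter (fun yp => agree_off n i x (fst yp)) mu.

(* (frak d_i F)(x)^2 = Var_{mu(.|x_{i^c})} (F(x_{i^c}, .)) *)
Definition dsq (mu : law) (n i : nat) (F : (nat -> R) -> R) (x : nat -> R) : R :=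
  let c := cond_atoms mu n i x in
  let m := fold_right Rplus 0 (map snd c) in
  let G := fun y : nat -> R => F (trunc n (upd x i (y i))) in
  Ex c (fun y => (G y)^2) / m - (Ex c G / m)^2.

Definition dnorm2 (mu : law) (n : nat) (F : (nat -> R) -> R) (x : nat -> R) : R :=
  fsum n (fun i => dsq mu n i F x).

Definition Ent (mu : law) (h : (nat -> R) -> R) : R :=
  Ex mu (fun x => h x * ln (h x)) - Ex mu h * ln (Ex mu h).

Definition dLSI (mu : law) (n : nat) (sigma2 : R) : Prop :=
  forall F : (nat -> R) -> R,
    Ent mu (fun x => (F (trunc n x))^2)
      <= 2 * sigma2 * Ex mu (dnorm2 mu n (fun x => F (trunc n x))).

Record Banach := {
  car :> Type;
  vzero : car;
  vadd : car -> car -> car;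
  vopp : car -> car;
  vscal : R -> car -> car;
  vnorm : car -> R;
  vadd_assoc : forall x y z, vadd x (vadd y z) = vadd (vadd x y) z;
  vadd_comm : forall x y, vadd x y = vadd y x;
  vadd_0 : forall x, vadd vzero x = x;
  vadd_opp : forall x, vadd x (vopp x) = vzero;
  vscal_1 : forall x, vscal 1 x = x;
  vscal_assoc : forall a b x, vscal a (vscal b x) = vscal (a * b) x;
  vscal_distr_v : forall a x y, vscal a (vadd x y) = vadd (vscal a x) (vscal a y);
  vscal_distr_s : forall a b x, vscal (a + b) x = vadd (vscal a x) (vscal b x);
  vnorm_eq0 : forall x, vnorm x = 0 -> x = vzero;
  vnorm_scal : forall a x, vnorm (vscal a x) = Rabs a * vnorm x;
  vnorm_triang : forall x y, vnorm (vadd x y) <= vnorm x + vnorm y;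
  complete : forall u : nat -> car,
    (forall eps, 0 < eps -> exists N, forall p q, (N <= p)%nat -> (N <= q)%nat ->
        vnorm (vadd (u p) (vopp (u q))) < eps) ->
    exists l, forall eps, 0 < eps -> exists N, forall p, (N <= p)%nat ->
        vnorm (vadd (u p) (vopp l)) < eps
}.

Arguments vzero {_}. Arguments vadd {_}. Arguments vopp {_}.
Arguments vscal {_}. Arguments vnorm {_}.

Definition vsum {V : Banach} (n : nat) (f : nat -> V) : V :=
  fold_right vadd vzero (map f (seq 0 n)).

Definition dual_ball {V : Banach} (phi : V -> R) : Prop :=
  (forall x y, phi (vadd x y) = phi x + phi y) /\
  (forall a x, phi (vscal a x) = a * phi x) /\
  (forall x, Rabs (phi x) <= vnorm x).

(* families t = (t_ij)_{1<=i<j<=n}, stored as t i j for i < j < n (0-indexed);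
   symmetric extension t_ji = t_ij, t_ii = 0 *)
Definition bfamily (V : Banach) := nat -> nat -> V.

Definition text {V : Banach} (t : bfamily V) (i j : nat) : V :=
  if Nat.ltb i j then t i j else if Nat.ltb j i then t j i else vzero.

Definition fdist {V : Banach} (n : nat) (t s : bfamily V) : R :=
  fold_right Rmax 0
    (flat_map (fun i => map (fun j => vnorm (vadd (t i j) (vopp (s i j))))
                            (seq (S i) (n - S i))) (seq 0 n)).

Definition fopen {V : Banach} (n : nat) (U : bfamily V -> Prop) : Prop :=
  forall t, U t -> exists eps, 0 < eps /\ forall s, fdist n t s < eps -> U s.

Definition fcompact {V : Banach} (n : nat) (T : bfamily V -> Prop) : Prop :=
  forall (I : Type) (U : I -> bfamily V -> Prop),
    (forall k, fopen n (U k)) ->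
    (forall t, T t -> exists k, U k t) ->
    exists l : list I, forall t, T t -> exists k, In k l /\ U k t.

Definition fT {V : Banach} (n : nat) (T : bfamily V -> Prop) (x : nat -> R) : R :=
  Rsup (fun r => exists t, T t /\
          r = vnorm (vsum n (fun i => vsum n (fun j =>
                 if Nat.ltb i j then vscal (x i * x j) (t i j) else vzero)))).

Definition opnorm (n : nat) (M : nat -> nat -> R) : R :=
  Rsup (fun r => exists u : nat -> R, fsum n (fun j => (u j)^2) <= 1 /\
          r = sqrt (fsum n (fun i => (fsum n (fun j => M i j * u j))^2))).

Definition T1 {V : Banach} (mu : law) (n : nat) (T : bfamily V -> Prop) : R :=
  Ex mu (fun x => Rsup (fun r => exists t phi, T t /\ dual_ball phi /\
          r = sqrt (fsum n (fun i => (fsum n (fun j => x j * phi (text t i j)))^2)))).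

Definition T2 {V : Banach} (n : nat) (T : bfamily V -> Prop) : R :=
  Rsup (fun r => exists t phi, T t /\ dual_ball phi /\
          r = opnorm n (fun i j => phi (text t i j))).

(* Write h(x) for the random quantity inside T_1, f = f_T, c = sigma^2 (b-a)^2
   and s = c T_2^2.  The proof is the entropy method:

   - The d-LSI applied to F = e^{u/2}, together with the conditional-variance
     bound Var(G) <= E(osc G)^2, gives Ent(e^u) <= sigma^2/2 E[|D|^2 e^u]
     whenever D_i bounds the decrease of u when only coordinate i changes.
   - Linearising the norm by a Hahn-Banach norming functional (obtained from
     Zorn's lemma), the discrete gradient of f is bounded by h, that of h by
     T_2, and hence that of h^2 by 2 h T_2.  Multiplying by b - a (the range of
     a coordinate) yields entropy bounds for e^{lam f}, e^{lam h}, e^{m h^2}.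
   - Herbst's argument (a differential inequality for lam -> ln E e^{lam Z})
     turns them into: ln E e^{lam h} <= lam T_1 + s lam^2/2, hence
     E h^2 <= 2 T_1^2 + 4 s and ln E e^{h^2/(4s)} <= E h^2/(2s).
   - The entropy duality E[g e^u] <= Ent(e^u) + E[e^u] ln E[e^g] with
     g = h^2/(4s) closes the estimate for f: for lam <= 1/(2 c T_2),
     ln E e^{lam f} <= lam E f + 2 c E h^2 lam^2.
   - Chernoff's bound and an optimisation over lam give the stated tail. *)

From Stdlib Require Import Reals List Lra Lia Classical ClassicalEpsilon
  FunctionalExtensionality PropExtensionality ZArith.
From mathcomp Require classical_sets boolp.
From Coquelicot Require Import Coquelicot.
Import ListNotations.
Open Scope R_scope.

Definition lsum {A : Type} (l : list A) (F : A -> R) : R := fold_right Rplus 0 (map F l).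

Lemma lsum_nil {A} (F : A -> R) : lsum [] F = 0.
Proof. reflexivity. Qed.
Lemma lsum_cons {A} (a : A) l F : lsum (a :: l) F = F a + lsum l F.
Proof. reflexivity. Qed.
Lemma lsum_app {A} (l1 l2 : list A) F : lsum (l1 ++ l2) F = lsum l1 F + lsum l2 F.
Proof.
  induction l1 as [|a l1 IH]; [unfold lsum; simpl; lra|].
  simpl app. rewrite !lsum_cons, IH. lra.
Qed.
Lemma lsum_ext {A} (l : list A) F G : (forall a, In a l -> F a = G a) -> lsum l F = lsum l G.
Proof.
  induction l as [|a l IH]; intros H; [reflexivity|].
  rewrite !lsum_cons, H by (simpl; auto). rewrite IH; auto.
  intros b Hb; apply H; simpl; auto.
Qed.
Lemma lsum_plus {A} (l : list A) F G : lsum l (fun a => F a + G a) = lsum l F + lsum l G.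
Proof. induction l; [unfold lsum; simpl; lra|]. rewrite !lsum_cons, IHl; lra. Qed.
Lemma lsum_minus {A} (l : list A) F G : lsum l (fun a => F a - G a) = lsum l F - lsum l G.
Proof. induction l; [unfold lsum; simpl; lra|]. rewrite !lsum_cons, IHl; lra. Qed.
Lemma lsum_scal {A} (l : list A) c F : lsum l (fun a => c * F a) = c * lsum l F.
Proof. induction l; [unfold lsum; simpl; lra|]. rewrite !lsum_cons, IHl; lra. Qed.
Lemma lsum_scal_r {A} (l : list A) c F : lsum l (fun a => F a * c) = lsum l F * c.
Proof. induction l; [unfold lsum; simpl; lra|]. rewrite !lsum_cons, IHl; lra. Qed.
Lemma lsum_zero {A} (l : list A) : lsum l (fun _ => 0) = 0.
Proof. induction l; [reflexivity|]. rewrite lsum_cons, IHl; lra. Qed.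
Lemma lsum_const {A} (l : list A) c : lsum l (fun _ => c) = INR (length l) * c.
Proof. induction l; [unfold lsum; simpl; ring|]. rewrite lsum_cons, IHl. simpl length. rewrite S_INR. ring. Qed.
Lemma lsum_le {A} (l : list A) F G : (forall a, In a l -> F a <= G a) -> lsum l F <= lsum l G.
Proof.
  induction l as [|a l IH]; intros H; [unfold lsum; simpl; lra|].
  rewrite !lsum_cons. assert (F a <= G a) by (apply H; simpl; auto).
  assert (lsum l F <= lsum l G) by (apply IH; intros; apply H; simpl; auto). lra.
Qed.
Lemma lsum_nonneg {A} (l : list A) F : (forall a, In a l -> 0 <= F a) -> 0 <= lsum l F.
Proof. intros H. rewrite <- (lsum_zero l). apply lsum_le; auto. Qed.
Lemma lsum_single_le {A} (l : list A) F a :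
  (forall b, In b l -> 0 <= F b) -> In a l -> F a <= lsum l F.
Proof.
  induction l as [|b l IH]; intros H Ha; [inversion Ha|]. rewrite lsum_cons.
  assert (0 <= F b) by (apply H; simpl; auto).
  assert (0 <= lsum l F) by (apply lsum_nonneg; intros; apply H; simpl; auto).
  destruct Ha as [<-|Ha]; [lra|].
  assert (F a <= lsum l F) by (apply IH; auto; intros; apply H; simpl; auto). lra.
Qed.
Lemma lsum_swap {A B} (l1 : list A) (l2 : list B) (F : A -> B -> R) :
  lsum l1 (fun a => lsum l2 (fun b => F a b)) = lsum l2 (fun b => lsum l1 (fun a => F a b)).
Proof.
  induction l1 as [|a l1 IH].
  - rewrite lsum_nil. symmetry. apply (lsum_zero l2).
  - rewrite lsum_cons, IH, <- lsum_plus. apply lsum_ext. intros; rewrite lsum_cons; lra.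
Qed.
Lemma lsum_filter {A} (l : list A) (P : A -> bool) F :
  lsum (filter P l) F = lsum l (fun a => if P a then F a else 0).
Proof.
  induction l as [|a l IH]; [reflexivity|]. simpl filter. rewrite (lsum_cons a l).
  destruct (P a); [rewrite lsum_cons|]; rewrite IH; lra.
Qed.

Lemma lsum_pos {A} (l : list A) (w F : A -> R) :
  (forall a, In a l -> 0 <= w a) -> lsum l w = 1 ->
  (forall a, 0 < F a) -> 0 < lsum l (fun a => w a * F a).
Proof.
  induction l as [|a l IH]; intros Hw Hs HF; [unfold lsum in Hs; simpl in Hs; lra|].
  rewrite lsum_cons in *. assert (Ha : 0 <= w a) by (apply Hw; simpl; auto).
  destruct (Rle_lt_or_eq_dec 0 (w a) Ha) as [Hlt|Heq].
  - assert (0 <= lsum l (fun a => w a * F a)).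
    { apply lsum_nonneg; intros b Hb. apply Rmult_le_pos; [apply Hw; simpl; auto|left; apply HF]. }
    pose proof (HF a). nra.
  - rewrite <- Heq, Rmult_0_l, Rplus_0_l. apply IH; auto; [intros; apply Hw; simpl; auto|lra].
Qed.

Lemma fsum_lsum n f : fsum n f = lsum (seq 0 n) f.
Proof. reflexivity. Qed.
Lemma fsum_0 f : fsum 0 f = 0.
Proof. reflexivity. Qed.
Lemma fsum_S n f : fsum (S n) f = fsum n f + f n.
Proof. rewrite !fsum_lsum, seq_S, lsum_app. unfold lsum at 2. simpl. lra. Qed.
Lemma fsum_ext n f g : (forall i, (i < n)%nat -> f i = g i) -> fsum n f = fsum n g.
Proof. intros H. apply lsum_ext. intros a Ha. apply in_seq in Ha. apply H; lia. Qed.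
Lemma fsum_le n f g : (forall i, (i < n)%nat -> f i <= g i) -> fsum n f <= fsum n g.
Proof. intros H. apply lsum_le. intros a Ha. apply in_seq in Ha. apply H; lia. Qed.
Lemma fsum_nonneg n f : (forall i, (i < n)%nat -> 0 <= f i) -> 0 <= fsum n f.
Proof. intros H. apply lsum_nonneg. intros a Ha. apply in_seq in Ha. apply H; lia. Qed.
Lemma fsum_plus n f g : fsum n (fun i => f i + g i) = fsum n f + fsum n g.
Proof. apply lsum_plus. Qed.
Lemma fsum_minus n f g : fsum n (fun i => f i - g i) = fsum n f - fsum n g.
Proof. apply lsum_minus. Qed.
Lemma fsum_scal n c f : fsum n (fun i => c * f i) = c * fsum n f.
Proof. apply lsum_scal. Qed.
Lemma fsum_const n c : fsum n (fun _ => c) = INR n * c.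
Proof. rewrite fsum_lsum, lsum_const, length_seq. reflexivity. Qed.
Lemma fsum_single_le n f i :
  (forall j, (j < n)%nat -> 0 <= f j) -> (i < n)%nat -> f i <= fsum n f.
Proof.
  intros H Hi. apply lsum_single_le; [|apply in_seq; lia].
  intros b Hb; apply in_seq in Hb; apply H; lia.
Qed.
Lemma fsum_abs n f : Rabs (fsum n f) <= fsum n (fun i => Rabs (f i)).
Proof.
  induction n; [rewrite !fsum_0, Rabs_R0; lra|].
  rewrite !fsum_S. eapply Rle_trans; [apply Rabs_triang|lra].
Qed.

Lemma fsum_delta n i F : (i < n)%nat -> fsum n (fun j => if Nat.eqb j i then F j else 0) = F i.
Proof.
  induction n as [|n IH]; intros Hi; [lia|]. rewrite fsum_S.
  destruct (Nat.eq_dec i n) as [->|Hne].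
  - rewrite Nat.eqb_refl, (fsum_ext n _ (fun _ => 0)), fsum_const; [lra|].
    intros j Hj. destruct (Nat.eqb_spec j n); [lia|reflexivity].
  - rewrite IH by lia. destruct (Nat.eqb_spec n i); [lia|lra].
Qed.

Lemma fsum_single n i0 F :
  (i0 < n)%nat -> (forall j, (j < n)%nat -> j <> i0 -> F j = 0) -> fsum n F = F i0.
Proof.
  intros Hi H. rewrite (fsum_ext n F (fun j => if Nat.eqb j i0 then F j else 0)); [apply fsum_delta; auto|].
  intros j Hj. destruct (Nat.eqb_spec j i0); auto.
Qed.

Lemma fsum_CS n f g :
  (fsum n (fun i => f i * g i))^2 <= fsum n (fun i => f i ^2) * fsum n (fun i => g i ^2).
Proof.
  set (l := seq 0 n). change (fsum n ?F) with (lsum l F).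
  assert (H : 0 <= lsum l (fun a => lsum l (fun b => (f a * g b - f b * g a)^2))).
  { apply lsum_nonneg; intros; apply lsum_nonneg; intros. apply pow2_ge_0. }
  assert (E : lsum l (fun a => lsum l (fun b => (f a * g b - f b * g a)^2)) =
     2 * (lsum l (fun a => f a ^2) * lsum l (fun a => g a ^2)) - 2 * (lsum l (fun a => f a * g a))^2).
  { transitivity (lsum l (fun a => f a ^2 * lsum l (fun b => g b ^2) + g a ^2 * lsum l (fun b => f b ^2)
        - 2 * (f a * g a) * lsum l (fun b => f b * g b))).
    - apply lsum_ext; intros a _. rewrite <- !lsum_scal, <- lsum_plus, <- lsum_minus.
      apply lsum_ext; intros b _. ring.
    - rewrite lsum_minus, lsum_plus, !lsum_scal_r.
      replace (lsum l (fun a => 2 * (f a * g a)) * lsum l (fun b => f b * g b)) with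
        (2 * lsum l (fun a => f a * g a) * lsum l (fun b => f b * g b)) by (rewrite lsum_scal; ring).
      ring. }
  lra.
Qed.

Lemma fsum_CS_sqrt n f g :
  fsum n (fun i => f i * g i) <= sqrt (fsum n (fun i => f i ^2)) * sqrt (fsum n (fun i => g i ^2)).
Proof.
  destruct (Rle_or_lt (fsum n (fun i => f i * g i)) 0) as [Hle|Hlt].
  - pose proof (Rmult_le_pos _ _ (sqrt_pos (fsum n (fun i => f i ^2))) (sqrt_pos (fsum n (fun i => g i ^2)))).
    lra.
  - rewrite <- sqrt_mult_alt by (apply fsum_nonneg; intros; apply pow2_ge_0).
    rewrite <- (sqrt_pow2 (fsum n (fun i => f i * g i))) by lra.
    apply sqrt_le_1_alt. apply fsum_CS.
Qed.

Arguments vadd_assoc {_}. Arguments vadd_comm {_}. Arguments vadd_0 {_}. Arguments vadd_opp {_}.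
Arguments vscal_1 {_}. Arguments vscal_assoc {_}. Arguments vscal_distr_v {_}.
Arguments vscal_distr_s {_}. Arguments vnorm_scal {_}. Arguments vnorm_triang {_}.

Lemma Rabs_m1 : Rabs (-1) = 1.
Proof. unfold Rabs; destruct Rcase_abs; lra. Qed.

Section VectorAlgebra.
Context {V : Banach}.

Lemma vadd_0r (x : V) : vadd x vzero = x.
Proof. rewrite vadd_comm. apply vadd_0. Qed.
Lemma vopp_l (x : V) : vadd (vopp x) x = vzero.
Proof. rewrite vadd_comm. apply vadd_opp. Qed.
Lemma vadd_cancel_l (x y z : V) : vadd x y = vadd x z -> y = z.
Proof. intros H. rewrite <- (vadd_0 y), <- (vadd_0 z), <- (vopp_l x), <- !vadd_assoc, H. reflexivity. Qed.
Lemma vadd_cancel_r (x y z : V) : vadd y x = vadd z x -> y = z.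
Proof. rewrite (vadd_comm y), (vadd_comm z). apply vadd_cancel_l. Qed.
Lemma vscal_0 (x : V) : vscal 0 x = vzero.
Proof. apply (vadd_cancel_l (vscal 0 x)). rewrite vadd_0r, <- vscal_distr_s, Rplus_0_r. reflexivity. Qed.
Lemma vscal_zero a : vscal a (@vzero V) = vzero.
Proof. apply (vadd_cancel_l (vscal a vzero)). rewrite vadd_0r, <- vscal_distr_v, vadd_0. reflexivity. Qed.
Lemma vopp_scal (x : V) : vopp x = vscal (-1) x.
Proof.
  apply (vadd_cancel_l x). rewrite vadd_opp. rewrite <- (vscal_1 x) at 1.
  rewrite <- vscal_distr_s. replace (1 + -1) with 0 by ring. rewrite vscal_0. reflexivity.
Qed.
Lemma vopp_zero : vopp (@vzero V) = vzero.
Proof. rewrite vopp_scal. apply vscal_zero. Qed.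
Lemma vopp_add (x y : V) : vopp (vadd x y) = vadd (vopp x) (vopp y).
Proof. rewrite !vopp_scal. apply vscal_distr_v. Qed.
Lemma vopp_opp (x : V) : vopp (vopp x) = x.
Proof. rewrite !vopp_scal, vscal_assoc. replace (-1 * -1) with 1 by ring. apply vscal_1. Qed.
Lemma vadd_swap4 (a b c d : V) : vadd (vadd a b) (vadd c d) = vadd (vadd a c) (vadd b d).
Proof. rewrite <- !vadd_assoc. f_equal. rewrite !vadd_assoc. f_equal. apply vadd_comm. Qed.
Lemma vsub_move (a b c : V) : vadd a b = c -> b = vadd c (vopp a).
Proof. intros <-. rewrite (vadd_comm a b), <- vadd_assoc, vadd_opp, vadd_0r. reflexivity. Qed.

Lemma vnorm_zero : vnorm (@vzero V) = 0.
Proof. rewrite <- (vscal_0 (@vzero V)), vnorm_scal, Rabs_R0. ring. Qed.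
Lemma vnorm_opp (x : V) : vnorm (vopp x) = vnorm x.
Proof. rewrite vopp_scal, vnorm_scal, Rabs_m1. ring. Qed.
Lemma vnorm_nonneg (x : V) : 0 <= vnorm x.
Proof. pose proof (vnorm_triang x (vopp x)). rewrite vadd_opp, vnorm_zero, vnorm_opp in H. lra. Qed.
Lemma vnorm_sub_sym (x y : V) : vnorm (vadd x (vopp y)) = vnorm (vadd y (vopp x)).
Proof. rewrite <- vnorm_opp, vopp_add, vopp_opp, vadd_comm. reflexivity. Qed.
Lemma vnorm_triang_sub (x y z : V) :
  vnorm (vadd x (vopp z)) <= vnorm (vadd x (vopp y)) + vnorm (vadd y (vopp z)).
Proof.
  replace (vadd x (vopp z)) with (vadd (vadd x (vopp y)) (vadd y (vopp z))); [apply vnorm_triang|].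
  rewrite <- vadd_assoc, (vadd_assoc (vopp y)), vopp_l, vadd_0. reflexivity.
Qed.
Lemma vnorm_le_sub (x y : V) : vnorm x <= vnorm y + vnorm (vadd x (vopp y)).
Proof.
  pose proof (vnorm_triang y (vadd x (vopp y))).
  rewrite (vadd_comm x), vadd_assoc, vadd_opp, vadd_0 in H. rewrite (vadd_comm x). exact H.
Qed.

Lemma vsum_S n (f : nat -> V) : vsum (S n) f = vadd (vsum n f) (f n).
Proof.
  unfold vsum. rewrite seq_S, map_app, fold_right_app. simpl.
  induction (map f (seq 0 n)) as [|a l IH]; simpl; [rewrite vadd_0r, vadd_0; reflexivity|].
  rewrite IH, vadd_assoc. reflexivity.
Qed.
Lemma vsum_ext n (f g : nat -> V) : (forall i, (i < n)%nat -> f i = g i) -> vsum n f = vsum n g.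
Proof.
  induction n; intros H; [reflexivity|].
  rewrite !vsum_S, (H n), IHn; auto.
Qed.
Lemma vnorm_vsum n (f : nat -> V) : vnorm (vsum n f) <= fsum n (fun i => vnorm (f i)).
Proof.
  induction n; [unfold vsum; simpl; rewrite vnorm_zero, fsum_0; lra|].
  rewrite vsum_S, fsum_S. pose proof (vnorm_triang (vsum n f) (f n)). lra.
Qed.

End VectorAlgebra.

Lemma zorn_preorder {A : Type} (a0 : A) (le : A -> A -> Prop) :
  (forall x, le x x) -> (forall x y z, le x y -> le y z -> le x z) ->
  (forall C : A -> Prop, (forall x y, C x -> C y -> le x y \/ le y x) ->
     exists u, forall x, C x -> le x u) ->
  exists m, forall x, le m x -> le x m.
Proof.
  intros Hrefl Htrans Hub.
  assert (E : forall x y, is_true (boolp.asbool (le x y)) = le x y) by (intros; apply boolp.asboolE).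
  destruct (@classical_sets.ZL_preorder A a0 (fun x y => boolp.asbool (le x y))) as [m Hm].
  - intros x. rewrite E. apply Hrefl.
  - intros x y z. rewrite !E. apply Htrans.
  - intros C HC. destruct (Hub C) as [u Hu].
    + intros x y Hx Hy. specialize (HC x y Hx Hy). cbv beta in HC. rewrite !E in HC. exact HC.
    + exists u. intros x Hx. rewrite E. auto.
  - exists m. intros x Hx. specialize (Hm x). cbv beta in Hm. rewrite !E in Hm. auto.
Qed.

(* A [partial_norming v] is a linear functional on a subspace
   containing v, dominated by the norm and norming v; a maximal one (Zorn) is
   defined everywhere, since such functionals extend by one dimension. *)
Record partial_norming {V : Banach} (v : V) := {
  pdom : V -> Prop; pval : V -> R;
  pdom_add : forall x y, pdom x -> pdom y -> pdom (vadd x y);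
  pdom_scal : forall a x, pdom x -> pdom (vscal a x);
  pval_add : forall x y, pdom x -> pdom y -> pval (vadd x y) = pval x + pval y;
  pval_scal : forall a x, pdom x -> pval (vscal a x) = a * pval x;
  pval_le : forall x, pdom x -> pval x <= vnorm x;
  pdom_v : pdom v; pval_v : pval v = vnorm v }.
Arguments pdom {V v}. Arguments pval {V v}. Arguments pdom_add {V v}. Arguments pdom_scal {V v}.
Arguments pval_add {V v}. Arguments pval_scal {V v}. Arguments pval_le {V v}.
Arguments pdom_v {V v}. Arguments pval_v {V v}.

Definition extends {V : Banach} {v : V} (P Q : partial_norming v) :=
  (forall x, pdom P x -> pdom Q x) /\ (forall x, pdom P x -> pval Q x = pval P x).

Definition is_chain {A : Type} (le : A -> A -> Prop) (C : A -> Prop) :=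
  forall x y, C x -> C y -> le x y \/ le y x.

Section HahnBanach.
Context {V : Banach} (v : V).

Let inhR : inhabited R := inhabits 0.

Lemma pdom_zero (P : partial_norming v) : pdom P vzero.
Proof. rewrite <- (vscal_0 v). apply pdom_scal, pdom_v. Qed.

Let line_val (x : V) : R := epsilon inhR (fun r => exists a, x = vscal a v /\ r = a * vnorm v).

Lemma line_val_eq a : line_val (vscal a v) = a * vnorm v.
Proof.
  unfold line_val.
  assert (Hex : exists r a0, vscal a v = vscal a0 v /\ r = a0 * vnorm v) by eauto.
  destruct (epsilon_spec inhR _ Hex) as [a' [H1 ->]].
  assert (Hz : vscal (a - a') v = vzero).
  { unfold Rminus. rewrite vscal_distr_s, H1, <- vscal_distr_s, Rplus_opp_r. apply vscal_0. }
  assert (H : Rabs (a - a') * vnorm v = 0) by (rewrite <- vnorm_scal, Hz; apply vnorm_zero).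
  apply Rmult_integral in H. destruct H as [H|H]; [|rewrite H; ring].
  apply Rabs_eq_0 in H. replace a with a' by lra. reflexivity.
Qed.

Definition line_norming : partial_norming v.
Proof.
  refine {| pdom := fun x => exists a, x = vscal a v; pval := line_val |}.
  - intros x y [a ->] [b ->]. exists (a + b). rewrite vscal_distr_s; auto.
  - intros c x [a ->]. exists (c * a). rewrite vscal_assoc; auto.
  - intros x y [a ->] [b ->]. rewrite <- vscal_distr_s, !line_val_eq. ring.
  - intros c x [a ->]. rewrite vscal_assoc, !line_val_eq. ring.
  - intros x [a ->]. rewrite line_val_eq, vnorm_scal.
    apply Rmult_le_compat_r; [apply vnorm_nonneg|apply Rle_abs].
  - exists 1. rewrite vscal_1; auto.
  - rewrite <- (vscal_1 v) at 1. rewrite line_val_eq. ring.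
Defined.

Section ChainUnion.
Variables (C : partial_norming v -> Prop) (Hch : is_chain extends C).

Let union_dom (x : V) : Prop := exists P, C P /\ pdom P x.
Let union_val (x : V) : R := epsilon inhR (fun r => exists P, C P /\ pdom P x /\ r = pval P x).

Lemma union_val_eq P x : C P -> pdom P x -> union_val x = pval P x.
Proof.
  intros HP Hx. unfold union_val.
  assert (Hex : exists r P, C P /\ pdom P x /\ r = pval P x) by eauto.
  destruct (epsilon_spec inhR _ Hex) as [P' [HP' [Hx' ->]]].
  destruct (Hch P P' HP HP') as [[_ H]|[_ H]]; rewrite H; auto.
Qed.

Lemma union_common x y :
  union_dom x -> union_dom y -> exists Q, C Q /\ pdom Q x /\ pdom Q y.
Proof.
  intros [P [HP Hx]] [P' [HP' Hy]].
  destruct (Hch P P' HP HP') as [[H _]|[H _]]; [exists P'|exists P]; auto.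
Qed.

Definition chain_union (P1 : partial_norming v) (H1 : C P1) : partial_norming v.
Proof.
  refine {| pdom := union_dom; pval := union_val |}.
  - intros x y Hx Hy. destruct (union_common x y Hx Hy) as [Q [HQ [Hx' Hy']]].
    exists Q. split; auto. apply pdom_add; auto.
  - intros a x [Q [HQ Hx]]. exists Q. split; auto. apply pdom_scal; auto.
  - intros x y Hx Hy. destruct (union_common x y Hx Hy) as [Q [HQ [Hx' Hy']]].
    rewrite !(union_val_eq Q); auto; [apply pval_add; auto|apply pdom_add; auto].
  - intros a x [Q [HQ Hx]]. rewrite !(union_val_eq Q); auto; [apply pval_scal; auto|apply pdom_scal; auto].
  - intros x [Q [HQ Hx]]. rewrite (union_val_eq Q); auto. apply pval_le; auto.
  - exists P1. split; auto. apply pdom_v.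
  - rewrite (union_val_eq P1); auto; [apply pval_v|apply pdom_v].
Defined.

Lemma chain_union_ub P1 H1 P : C P -> extends P (chain_union P1 H1).
Proof. intros HP. split; simpl; [intros x Hx; exists P; auto|intros x Hx; apply union_val_eq; auto]. Qed.

End ChainUnion.

(* Consistency of the one-dimensional extension: any value c between the
   two bounds below keeps the extension dominated by the norm. *)
Lemma extension_gap (M : partial_norming v) x0 d d2 :
  pdom M d -> pdom M d2 -> pval M d - vnorm (vadd d (vopp x0)) <= vnorm (vadd d2 x0) - pval M d2.
Proof.
  intros Hd Hd2.
  assert (H1 : pval M d + pval M d2 <= vnorm (vadd d d2))
    by (rewrite <- pval_add; auto; apply pval_le, pdom_add; auto).
  pose proof (vnorm_triang (vadd d (vopp x0)) (vadd d2 x0)) as H.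
  rewrite vadd_swap4, vopp_l, vadd_0r in H. lra.
Qed.

Lemma extension_constant (M : partial_norming v) x0 : exists c,
  (forall d, pdom M d -> pval M d - vnorm (vadd d (vopp x0)) <= c) /\
  (forall d, pdom M d -> c <= vnorm (vadd d x0) - pval M d).
Proof.
  set (E := fun r => exists d, pdom M d /\ r = pval M d - vnorm (vadd d (vopp x0))).
  assert (Hb : bound E).
  { exists (vnorm (vadd vzero x0) - pval M vzero).
    intros r [d [Hd ->]]. apply extension_gap; auto. apply pdom_zero. }
  assert (Hne : exists r, E r) by (eexists; exists vzero; split; [apply pdom_zero|reflexivity]).
  destruct (completeness E Hb Hne) as [c [Hc1 Hc2]]. exists c. split.
  - intros d Hd; apply Hc1; exists d; auto.
  - intros d2 Hd2; apply Hc2; intros r [d [Hd ->]]; apply extension_gap; auto.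
Qed.

Lemma decomp_uniq (M : partial_norming v) x0 d d' s s' :
  ~ pdom M x0 -> pdom M d -> pdom M d' ->
  vadd d (vscal s x0) = vadd d' (vscal s' x0) -> d = d' /\ s = s'.
Proof.
  intros Hx0 Hd Hd' E.
  assert (Hs : s = s').
  { apply NNPP; intro Hne.
    assert (E2 : vscal (s - s') x0 = vadd d' (vopp d)).
    { apply vsub_move in E. unfold Rminus. rewrite vscal_distr_s, E.
      rewrite <- (vadd_assoc (vadd d' (vscal s' x0))), vadd_swap4, <- vscal_distr_s, Rplus_opp_r,
        vscal_0, vadd_0r. reflexivity. }
    apply Hx0. replace x0 with (vscal (/ (s - s')) (vscal (s - s') x0)).
    - rewrite E2. apply pdom_scal, pdom_add; auto. rewrite vopp_scal. apply pdom_scal; auto.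
    - rewrite vscal_assoc, Rinv_l, vscal_1; auto. lra. }
  subst. split; auto. apply (vadd_cancel_r (vscal s' x0)); auto.
Qed.

Lemma direct_sum_functional (M : partial_norming v) x0 c : ~ pdom M x0 ->
  exists g' : V -> R, forall d s, pdom M d -> g' (vadd d (vscal s x0)) = pval M d + s * c.
Proof.
  intros Hx0.
  exists (fun y => epsilon inhR
    (fun r => exists d s, pdom M d /\ y = vadd d (vscal s x0) /\ r = pval M d + s * c)).
  intros d s Hd.
  assert (Hex : exists r d0 s0, pdom M d0 /\ vadd d (vscal s x0) = vadd d0 (vscal s0 x0)
                                /\ r = pval M d0 + s0 * c) by (exists (pval M d + s * c), d, s; auto).
  destruct (epsilon_spec inhR _ Hex) as [d0 [s0 [Hd0 [E0 ->]]]].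
  destruct (decomp_uniq M x0 d d0 s s0 Hx0 Hd Hd0 E0) as [-> ->]. reflexivity.
Qed.

(* With c in the gap of [extension_gap], [d + s x0 |-> pval d + s c] is
   dominated by the norm (scale to |s| = 1 and use the two bounds). *)
Lemma extension_dominated (M : partial_norming v) x0 c d s :
  (forall d, pdom M d -> pval M d - vnorm (vadd d (vopp x0)) <= c) ->
  (forall d, pdom M d -> c <= vnorm (vadd d x0) - pval M d) ->
  pdom M d -> pval M d + s * c <= vnorm (vadd d (vscal s x0)).
Proof.
  intros Hlo Hhi Hd. destruct (Rtotal_order s 0) as [Hs|[->|Hs]].
  - set (r := - s). assert (Hr : 0 < r) by (unfold r; lra).
    set (d1 := vscal (/ r) d). assert (Hd1 : pdom M d1) by (apply pdom_scal; auto).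
    pose proof (Hlo d1 Hd1) as H.
    assert (Eg : pval M d = r * pval M d1) by (unfold d1; rewrite pval_scal by auto; field; lra).
    assert (Ev : vadd d (vscal s x0) = vscal r (vadd d1 (vopp x0))).
    { unfold d1. rewrite vscal_distr_v, vscal_assoc, Rinv_r, vscal_1 by lra.
      rewrite vopp_scal, vscal_assoc. do 2 f_equal. unfold r; ring. }
    rewrite Eg, Ev, vnorm_scal, Rabs_pos_eq by lra. unfold r in *. nra.
  - rewrite vscal_0, vadd_0r, Rmult_0_l, Rplus_0_r. apply pval_le; auto.
  - set (d1 := vscal (/ s) d). assert (Hd1 : pdom M d1) by (apply pdom_scal; auto).
    pose proof (Hhi d1 Hd1) as H.
    assert (Eg : pval M d = s * pval M d1) by (unfold d1; rewrite pval_scal by auto; field; lra).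
    assert (Ev : vadd d (vscal s x0) = vscal s (vadd d1 x0))
      by (unfold d1; rewrite vscal_distr_v, vscal_assoc, Rinv_r, vscal_1 by lra; reflexivity).
    rewrite Eg, Ev, vnorm_scal, Rabs_pos_eq by lra. nra.
Qed.

Lemma extend_step (M : partial_norming v) x0 :
  ~ pdom M x0 -> exists Q : partial_norming v, extends M Q /\ pdom Q x0.
Proof.
  intros Hx0.
  destruct (extension_constant M x0) as [c [Hlo Hhi]].
  destruct (direct_sum_functional M x0 c Hx0) as [g' Hg'].
  assert (Hadd : forall d1 s1 d2 s2, vadd (vadd d1 (vscal s1 x0)) (vadd d2 (vscal s2 x0)) =
                                    vadd (vadd d1 d2) (vscal (s1 + s2) x0))
    by (intros; rewrite vadd_swap4, vscal_distr_s; reflexivity).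
  assert (Hscal : forall a d s, vscal a (vadd d (vscal s x0)) = vadd (vscal a d) (vscal (a * s) x0))
    by (intros; rewrite vscal_distr_v, vscal_assoc; reflexivity).
  assert (Hd0 : forall d, d = vadd d (vscal 0 x0)) by (intros; rewrite vscal_0, vadd_0r; auto).
  unshelve eexists {| pdom := fun y => exists d s, pdom M d /\ y = vadd d (vscal s x0); pval := g' |}.
  - intros x y [d1 [s1 [Hd1 ->]]] [d2 [s2 [Hd2 ->]]]. exists (vadd d1 d2), (s1 + s2).
    split; [apply pdom_add; auto|apply Hadd].
  - intros a x [d [s [Hd ->]]]. exists (vscal a d), (a * s). split; [apply pdom_scal; auto|apply Hscal].
  - intros x y [d1 [s1 [Hd1 ->]]] [d2 [s2 [Hd2 ->]]].
    rewrite Hadd, !Hg', pval_add by (auto; apply pdom_add; auto). ring.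
  - intros a x [d [s [Hd ->]]]. rewrite Hscal, !Hg', pval_scal by (auto; apply pdom_scal; auto). ring.
  - intros x [d [s [Hd ->]]]. rewrite Hg' by auto. apply extension_dominated; auto.
  - exists v, 0. split; [apply pdom_v|apply Hd0].
  - rewrite (Hd0 v) at 1. rewrite Hg', pval_v by apply pdom_v. ring.
  - split; [split|].
    + intros x Hx. exists x, 0. split; auto.
    + intros x Hx. simpl. rewrite (Hd0 x) at 1. rewrite Hg' by auto. ring.
    + exists vzero, 1. split; [apply pdom_zero|rewrite vadd_0, vscal_1; auto].
Qed.

Theorem hahn_banach : exists phi : V -> R, dual_ball phi /\ phi v = vnorm v.
Proof.
  destruct (zorn_preorder line_norming extends) as [M HM].
  - intros P; split; auto.
  - intros P Q S [H1 H2] [H3 H4]. split; auto. intros x Hx. rewrite H4, H2; auto.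
  - intros C Hch. destruct (classic (exists P, C P)) as [[P1 H1]|Hn].
    + exists (chain_union C Hch P1 H1). intros P HP. apply chain_union_ub; auto.
    + exists line_norming. intros P HP. exfalso; eauto.
  - assert (Hall : forall x, pdom M x).
    { intros x0. apply NNPP; intro Hx0. destruct (extend_step M x0 Hx0) as [Q [HMQ HQ]].
      apply Hx0. apply (proj1 (HM Q HMQ)); auto. }
    exists (pval M). split; [|apply pval_v]. split; [|split].
    + intros; apply pval_add; auto.
    + intros; apply pval_scal; auto.
    + intros x. apply Rabs_le. split; [|apply pval_le; auto].
      pose proof (pval_le M (vscal (-1) x) (Hall _)) as H.
      rewrite pval_scal, vnorm_scal, Rabs_m1 in H by auto. lra.
Qed.

End HahnBanach.

Lemma Rsup_lub E : bound E -> (exists x, E x) -> is_lub E (Rsup E).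
Proof.
  intros Hb Hne. unfold Rsup. destruct (excluded_middle_informative (exists l, is_lub E l)) as [h|h].
  - destruct (constructive_indefinite_description _ h); simpl; auto.
  - exfalso. apply h. destruct (completeness E Hb Hne) as [m Hm]. eauto.
Qed.
Lemma Rsup_ge E r : bound E -> E r -> r <= Rsup E.
Proof. intros Hb Hr. apply (Rsup_lub E Hb (ex_intro _ r Hr)); auto. Qed.
Lemma Rsup_le E M : (exists x, E x) -> (forall r, E r -> r <= M) -> Rsup E <= M.
Proof. intros Hne H. apply (Rsup_lub E (ex_intro _ M H) Hne). exact H. Qed.
Lemma Rsup_approx E eps : bound E -> (exists x, E x) -> 0 < eps -> exists r, E r /\ Rsup E - eps < r.
Proof.
  intros Hb Hne He. apply NNPP; intro H.
  assert (Hub : is_upper_bound E (Rsup E - eps)).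
  { intros r Hr. apply Rnot_lt_le. intro Hlt. apply H. exists r; auto. }
  pose proof (proj2 (Rsup_lub E Hb Hne) _ Hub). lra.
Qed.
Lemma Rsup_nonneg E : bound E -> (exists x, E x /\ 0 <= x) -> 0 <= Rsup E.
Proof. intros Hb [x [Hx Hx0]]. pose proof (Rsup_ge E x Hb Hx). lra. Qed.
Lemma Rsup_ext E F : (forall r, E r <-> F r) -> Rsup E = Rsup F.
Proof. intros H. f_equal. apply functional_extensionality; intro r. apply propositional_extensionality; auto. Qed.

Lemma Ex_lsum mu F : Ex mu F = lsum mu (fun xp => snd xp * F (fst xp)).
Proof. reflexivity. Qed.

Definition nonneg_weights (mu : law) := forall xp, In xp mu -> 0 <= snd xp.

Lemma Ex_ext mu F G : (forall xp, In xp mu -> F (fst xp) = G (fst xp)) -> Ex mu F = Ex mu G.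
Proof. intros H. apply lsum_ext. intros a Ha; rewrite H; auto. Qed.
Lemma Ex_le mu F G :
  nonneg_weights mu -> (forall xp, In xp mu -> F (fst xp) <= G (fst xp)) -> Ex mu F <= Ex mu G.
Proof. intros Hw H. apply lsum_le. intros a Ha. apply Rmult_le_compat_l; auto. Qed.
Lemma Ex_nonneg mu F : nonneg_weights mu -> (forall xp, In xp mu -> 0 <= F (fst xp)) -> 0 <= Ex mu F.
Proof. intros Hw H. apply lsum_nonneg. intros a Ha. apply Rmult_le_pos; auto. Qed.
Lemma Ex_plus mu F G : Ex mu (fun x => F x + G x) = Ex mu F + Ex mu G.
Proof. rewrite !Ex_lsum, <- lsum_plus. apply lsum_ext; intros; ring. Qed.
Lemma Ex_minus mu F G : Ex mu (fun x => F x - G x) = Ex mu F - Ex mu G.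
Proof. rewrite !Ex_lsum, <- lsum_minus. apply lsum_ext; intros; ring. Qed.
Lemma Ex_scal mu c F : Ex mu (fun x => c * F x) = c * Ex mu F.
Proof. rewrite !Ex_lsum, <- lsum_scal. apply lsum_ext; intros; ring. Qed.
Lemma Ex_const mu c : is_prob mu -> Ex mu (fun _ => c) = c.
Proof. intros [_ Hp]. rewrite Ex_lsum, lsum_scal_r. change (lsum mu snd) with (fold_right Rplus 0 (map snd mu)). rewrite Hp; ring. Qed.
Lemma Ex_fsum mu n (F : nat -> (nat -> R) -> R) :
  Ex mu (fun x => fsum n (fun i => F i x)) = fsum n (fun i => Ex mu (F i)).
Proof.
  rewrite Ex_lsum, (lsum_ext mu _ (fun xp => lsum (seq 0 n) (fun i => snd xp * F i (fst xp)))).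
  - apply lsum_swap.
  - intros; rewrite lsum_scal. reflexivity.
Qed.
Lemma Ex_pos mu F : is_prob mu -> (forall x, 0 < F x) -> 0 < Ex mu F.
Proof. intros [Hw Hs] HF. apply (lsum_pos mu snd (fun xp => F (fst xp))); auto. Qed.

Lemma exp_le_exp x y : x <= y -> exp x <= exp y.
Proof. intros [H| ->]; [left; apply exp_increasing; auto|lra]. Qed.

Lemma chernoff mu (F : (nat -> R) -> R) t l : nonneg_weights mu -> 0 <= l ->
  Pr mu (fun x => F x >= t) <= Ex mu (fun x => exp (l * (F x - t))).
Proof.
  intros Hw Hl. apply lsum_le. intros xp Hxp. pose proof (Hw xp Hxp).
  pose proof (exp_pos (l * (F (fst xp) - t))).
  destruct (excluded_middle_informative (F (fst xp) >= t)); [|nra].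
  assert (1 <= exp (l * (F (fst xp) - t))).
  { rewrite <- exp_0. apply exp_le_exp. apply Rmult_le_pos; lra. }
  nra.
Qed.

Lemma Pr_le_1 mu P : is_prob mu -> Pr mu P <= 1.
Proof.
  intros [Hw Hs]. rewrite <- Hs. apply lsum_le. intros xp Hxp. pose proof (Hw xp Hxp).
  destruct (excluded_middle_informative (P (fst xp))); lra.
Qed.

Lemma agree_spec n i x y :
  agree_off n i x y = true <-> (forall j, (j < n)%nat -> j <> i -> x j = y j).
Proof.
  unfold agree_off. rewrite forallb_forall. split.
  - intros H j Hj Hji. specialize (H j (proj2 (in_seq n 0 j) (conj (Nat.le_0_l j) Hj))).
    apply Bool.orb_true_iff in H. destruct H as [H|H]; [apply Nat.eqb_eq in H; contradiction|].
    destruct (Req_EM_T (x j) (y j)); auto. discriminate.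
  - intros H j Hj. apply in_seq in Hj. destruct (Nat.eqb_spec j i); auto. simpl.
    destruct (Req_EM_T (x j) (y j)) as [e|e]; auto. exfalso; apply e, H; auto; lia.
Qed.
Lemma agree_sym n i x y : agree_off n i x y = agree_off n i y x.
Proof. apply Bool.eq_true_iff_eq. rewrite !agree_spec. split; intros H j Hj Hji; symmetry; auto. Qed.
Lemma agree_trans n i x y z :
  agree_off n i x y = true -> agree_off n i y z = true -> agree_off n i x z = true.
Proof. rewrite !agree_spec. intros H1 H2 j Hj Hji. rewrite H1, H2; auto. Qed.
Lemma agree_refl n i x : agree_off n i x x = true.
Proof. rewrite agree_spec. auto. Qed.
Lemma agree_eq n i x y z : agree_off n i x y = true -> agree_off n i x z = agree_off n i y z.
Proof.
  intros H. apply Bool.eq_true_iff_eq. split; intros H'.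
  - apply (agree_trans n i y x z); auto. rewrite agree_sym; auto.
  - apply (agree_trans n i x y z); auto.
Qed.
Lemma trunc_upd_agree n i x y : agree_off n i x y = true -> trunc n (upd x i (y i)) = trunc n y.
Proof.
  intros H. rewrite agree_spec in H. apply functional_extensionality; intro k. unfold trunc, upd.
  destruct (Nat.ltb_spec k n); auto. destruct (Nat.eqb_spec k i); subst; auto.
Qed.

(* The (normalised) variance of G under a finite measure c is at most the
   mean of B, when B controls the squared oscillations pairwise:
   Var G = 1/2 E E (G y - G y')^2 <= 1/2 E E (B y + B y') = E B. *)
Lemma variance_le (c : law) (G B : (nat -> R) -> R) :
  nonneg_weights c -> (forall yp, In yp c -> 0 <= B (fst yp)) ->
  (forall yp yp', In yp c -> In yp' c -> (G (fst yp) - G (fst yp'))^2 <= B (fst yp) + B (fst yp')) ->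
  Ex c (fun y => (G y)^2) / fold_right Rplus 0 (map snd c) - (Ex c G / fold_right Rplus 0 (map snd c))^2
    <= Ex c B / fold_right Rplus 0 (map snd c).
Proof.
  intros Hw HB Hpair.
  change (fold_right Rplus 0 (map snd c)) with (lsum c snd).
  set (m := lsum c snd). set (E1 := Ex c G). set (E2 := Ex c (fun y => (G y)^2)). set (EB := Ex c B).
  assert (Hm : 0 <= m) by (apply lsum_nonneg; auto).
  set (DS := lsum c (fun yp => lsum c (fun yp' => snd yp * snd yp' * (G (fst yp) - G (fst yp'))^2))).
  assert (HDS : DS = 2 * m * E2 - 2 * E1 ^ 2).
  { unfold DS. transitivity (lsum c (fun yp => (snd yp * G (fst yp) ^2) * m + snd yp * E2
                                              - 2 * (snd yp * G (fst yp)) * E1)).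
    - apply lsum_ext; intros yp _. unfold m, E1, E2. rewrite !Ex_lsum, <- !lsum_scal, <- lsum_plus, <- lsum_minus.
      apply lsum_ext; intros; ring.
    - rewrite lsum_minus, lsum_plus, !lsum_scal_r.
      replace (lsum c (fun a => 2 * (snd a * G (fst a)))) with (2 * E1) by (unfold E1; rewrite Ex_lsum, lsum_scal; auto).
      unfold E1, E2. rewrite !Ex_lsum. fold m. ring. }
  assert (HDB : DS <= 2 * m * EB).
  { unfold DS. transitivity (lsum c (fun yp => lsum c (fun yp' => snd yp * snd yp' * (B (fst yp) + B (fst yp'))))).
    - apply lsum_le; intros; apply lsum_le; intros.
      apply Rmult_le_compat_l; auto. apply Rmult_le_pos; auto.
    - right. transitivity (lsum c (fun yp => (snd yp * B (fst yp)) * m + snd yp * EB)).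
      + apply lsum_ext; intros yp _. unfold m, EB. rewrite Ex_lsum, <- !lsum_scal, <- lsum_plus.
        apply lsum_ext; intros; ring.
      + rewrite lsum_plus, !lsum_scal_r. unfold EB. rewrite Ex_lsum. fold m. ring. }
  destruct (Rle_lt_or_eq_dec 0 m Hm) as [Hpos|Hz].
  - replace (E2 / m - (E1 / m) ^ 2) with ((m * E2 - E1^2) / (m * m)) by (field; lra).
    replace (EB / m) with ((m * EB) / (m * m)) by (field; lra).
    apply Rmult_le_compat_r; [left; apply Rinv_0_lt_compat; nra|lra].
  - rewrite <- Hz. unfold Rdiv. rewrite Rinv_0. lra.
Qed.

Lemma Ex_cond_mean mu n i (B : (nat -> R) -> R) : nonneg_weights mu ->
  Ex mu (fun x => Ex (cond_atoms mu n i x) B / fold_right Rplus 0 (map snd (cond_atoms mu n i x)))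
  = Ex mu B.
Proof.
  intros Hw.
  set (Rel := fun x y => agree_off n i x y).
  set (m := fun x => lsum mu (fun yp => if Rel x (fst yp) then snd yp else 0)).
  assert (Hm : forall x, fold_right Rplus 0 (map snd (cond_atoms mu n i x)) = m x)
    by (intros x; apply (lsum_filter mu _ snd)).
  assert (HE : forall x, Ex (cond_atoms mu n i x) B
                         = lsum mu (fun yp => if Rel x (fst yp) then snd yp * B (fst yp) else 0))
    by (intros x; apply lsum_filter).
  assert (Hmeq : forall x y, Rel x y = true -> m x = m y).
  { intros x y H. apply lsum_ext. intros zp _. unfold Rel. rewrite (agree_eq n i x y (fst zp) H). reflexivity. }
  rewrite Ex_lsum, (lsum_ext mu _ (fun xp => lsum mu (fun yp =>
      if Rel (fst xp) (fst yp) then snd xp * snd yp * B (fst yp) / m (fst xp) else 0))).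
  2:{ intros xp _. rewrite Hm, HE. unfold Rdiv. rewrite <- lsum_scal_r, <- lsum_scal.
      apply lsum_ext; intros yp _. destruct (Rel (fst xp) (fst yp)); ring. }
  rewrite lsum_swap, Ex_lsum. apply lsum_ext; intros yp Hyp.
  rewrite (lsum_ext mu _ (fun xp => (if Rel (fst yp) (fst xp) then snd xp else 0)
                                     * (snd yp * B (fst yp) / m (fst yp)))).
  2:{ intros xp _. assert (ES : Rel (fst xp) (fst yp) = Rel (fst yp) (fst xp)) by apply agree_sym.
      rewrite ES. destruct (Rel (fst yp) (fst xp)) eqn:E; [|ring].
      rewrite (Hmeq (fst xp) (fst yp)) by exact ES. unfold Rdiv; ring. }
  rewrite lsum_scal_r. fold (m (fst yp)).
  assert (Hq : snd yp <= m (fst yp)).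
  { replace (snd yp) with ((fun zp => if Rel (fst yp) (fst zp) then snd zp else 0) yp)
      by (simpl; unfold Rel; rewrite agree_refl; auto).
    apply (lsum_single_le mu (fun zp => if Rel (fst yp) (fst zp) then snd zp else 0) yp); auto.
    intros b Hb. destruct (Rel (fst yp) (fst b)); [apply Hw; auto|lra]. }
  pose proof (Hw yp Hyp).
  destruct (Req_dec (m (fst yp)) 0) as [Hz|Hnz].
  - rewrite Hz. replace (snd yp) with 0 by lra. unfold Rdiv. ring.
  - field. auto.
Qed.

Definition isatom (mu : law) (y : nat -> R) := exists p, In (y, p) mu.

Lemma exp_half_sq a : (exp (a / 2))^2 = exp a.
Proof. simpl. rewrite Rmult_1_r, <- exp_plus. f_equal. field. Qed.

Lemma exp_half_diff_sq a a' d : a' <= a -> a - a' <= d ->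
  (exp (a / 2) - exp (a' / 2))^2 <= / 4 * d ^2 * exp a.
Proof.
  intros H1 H2.
  assert (E : exp (a' / 2) = exp (a / 2) * exp (a' / 2 - a / 2)) by (rewrite <- exp_plus; f_equal; ring).
  pose proof (exp_ineq1_le (a' / 2 - a / 2)). pose proof (exp_pos (a / 2)).
  assert (L : 0 <= exp (a / 2) - exp (a' / 2) <= (a - a') / 2 * exp (a / 2)).
  { split.
    - assert (exp (a' / 2) <= exp (a / 2)) by (apply exp_le_exp; lra). lra.
    - rewrite E. nra. }
  rewrite <- (exp_half_sq a).
  assert (Hsq : (exp (a / 2) - exp (a' / 2))^2 <= ((a - a') / 2 * exp (a / 2))^2) by (apply pow_incr; auto).
  assert (((a - a') / 2)^2 <= (d/2)^2) by (apply pow_incr; lra).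
  pose proof (pow2_ge_0 (exp (a / 2))).
  replace (/ 4 * d ^ 2 * exp (a / 2) ^ 2) with ((d/2)^2 * (exp (a/2))^2) by field.
  rewrite Rpow_mult_distr in Hsq. nra.
Qed.

Lemma exp_half_osc a a' d d' : (a' <= a -> a - a' <= d) -> (a <= a' -> a' - a <= d') ->
  (exp (a / 2) - exp (a' / 2))^2 <= / 4 * d ^ 2 * exp a + / 4 * d' ^ 2 * exp a'.
Proof.
  intros Hd Hd'. pose proof (exp_pos a). pose proof (exp_pos a').
  pose proof (pow2_ge_0 d). pose proof (pow2_ge_0 d').
  destruct (Rle_dec a' a) as [Hle|Hgt].
  - pose proof (exp_half_diff_sq a a' d Hle (Hd Hle)). nra.
  - assert (Hle : a <= a') by lra. pose proof (exp_half_diff_sq a' a d' Hle (Hd' Hle)).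
    replace ((exp (a / 2) - exp (a' / 2))^2) with ((exp (a' / 2) - exp (a / 2))^2) by ring. nra.
Qed.

(* If, for every atom y and
   every atom y' differing from y only in coordinate i, u decreases by at
   most D_y(i), then Ent(e^u) <= sigma2/2 E[W] with |D_y|^2 e^{u y} <= W y.
   (Apply the d-LSI to F = e^{u/2} and bound each conditional variance by
   [variance_le], using (e^{a/2} - e^{a'/2})^2 <= (a - a')^2 e^a / 4.) *)
Lemma lsi_entropy_exp (mu : law) (n : nat) (sigma2 : R) (u W : (nat -> R) -> R) :
  is_prob mu -> dLSI mu n sigma2 -> 0 <= sigma2 ->
  (forall x, u (trunc n x) = u x) ->
  (forall y, exists D : nat -> R, fsum n (fun i => D i ^2) * exp (u y) <= W y /\
     (isatom mu y -> forall i, (i < n)%nat -> forall y', isatom mu y' -> agree_off n i y y' = true ->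
        u y' <= u y -> u y - u y' <= D i)) ->
  Ent mu (fun x => exp (u x)) <= sigma2 / 2 * Ex mu W.
Proof.
  intros Hp HL Hs Hu HD.
  destruct (choice _ HD) as [Dc HDc].
  set (B := fun i y => / 4 * (Dc y i)^2 * exp (u y)).
  assert (HB0 : forall i y, 0 <= B i y).
  { intros i y. unfold B. pose proof (exp_pos (u y)). pose proof (pow2_ge_0 (Dc y i)). nra. }
  set (Gf := fun x => exp (u x / 2)).
  specialize (HL Gf).
  assert (E1 : (fun x => (Gf (trunc n x))^2) = (fun x => exp (u x))).
  { apply functional_extensionality; intro x. unfold Gf. rewrite Hu. apply exp_half_sq. }
  assert (E2 : (fun x => Gf (trunc n x)) = Gf).
  { apply functional_extensionality; intro x. unfold Gf. rewrite Hu. auto. }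
  rewrite E1, E2 in HL.
  assert (Hw : nonneg_weights mu) by exact (proj1 Hp).
  assert (Hi : forall i, (i < n)%nat -> Ex mu (dsq mu n i Gf) <= Ex mu (B i)).
  { intros i Hin. rewrite <- (Ex_cond_mean mu n i (B i) Hw).
    apply Ex_le; auto. intros xp Hxp. apply variance_le; auto.
    - intros yp Hyp. apply filter_In in Hyp. apply Hw; tauto.
    - intros yp yp' Hyp Hyp'. apply filter_In in Hyp, Hyp'.
      destruct Hyp as [Hyp Ha]. destruct Hyp' as [Hyp' Ha'].
      rewrite !trunc_upd_agree by auto. unfold Gf. rewrite !Hu.
      assert (Hyy : agree_off n i (fst yp) (fst yp') = true)
        by (apply (agree_trans n i _ (fst xp)); auto; rewrite agree_sym; auto).
      assert (At : isatom mu (fst yp)) by (exists (snd yp); rewrite <- surjective_pairing; auto).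
      assert (At' : isatom mu (fst yp')) by (exists (snd yp'); rewrite <- surjective_pairing; auto).
      unfold B. apply exp_half_osc; intros Hle; apply (proj2 (HDc _)); auto; rewrite agree_sym; auto. }
  assert (HS : Ex mu (dnorm2 mu n Gf) <= / 4 * Ex mu W).
  { unfold dnorm2. rewrite Ex_fsum. eapply Rle_trans; [apply fsum_le; exact Hi|].
    rewrite <- Ex_fsum, <- Ex_scal. apply Ex_le; auto. intros xp _. unfold B.
    rewrite (fsum_ext n _ (fun i => (/4 * exp (u (fst xp))) * Dc (fst xp) i ^2)) by (intros; ring).
    rewrite fsum_scal. destruct (HDc (fst xp)) as [H _]. nra. }
  unfold Rdiv. nra.
Qed.

Lemma eps_le X Y K : (forall eps, 0 < eps <= 1 -> X <= Y + eps * K) -> X <= Y.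
Proof.
  intros H. destruct (Rle_or_lt K 0) as [HK|HK]; [pose proof (H 1 ltac:(lra)); lra|].
  apply Rnot_lt_le; intro Hc.
  set (e := Rmin 1 ((X - Y) / (2 * K))).
  assert (He : 0 < e <= 1) by (split; [apply Rmin_pos; [lra|apply Rdiv_lt_0_compat; lra]|apply Rmin_l]).
  assert (e * K <= (X - Y) / 2).
  { assert (e <= (X - Y) / (2 * K)) by apply Rmin_r.
    apply (Rmult_le_compat_r K) in H0; [|lra].
    replace ((X - Y) / (2 * K) * K) with ((X - Y) / 2) in H0 by (field; lra). lra. }
  pose proof (H e He). lra.
Qed.

Lemma lsi_entropy_exp_approx (mu : law) (n : nat) (s2 : R) (u P Q : (nat -> R) -> R) :
  is_prob mu -> dLSI mu n s2 -> 0 <= s2 ->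
  (forall x, u (trunc n x) = u x) ->
  (forall eps, 0 < eps <= 1 -> forall y, exists D : nat -> R,
     fsum n (fun i => D i ^2) <= P y + eps * Q y /\
     (isatom mu y -> forall i, (i < n)%nat -> forall y', isatom mu y' -> agree_off n i y y' = true ->
        u y' <= u y -> u y - u y' <= D i)) ->
  Ent mu (fun x => exp (u x)) <= s2 / 2 * Ex mu (fun x => P x * exp (u x)).
Proof.
  intros Hp HL Hs Hu HD.
  apply (eps_le _ _ (s2 / 2 * Ex mu (fun x => Q x * exp (u x)))). intros eps He.
  eapply Rle_trans; [apply (lsi_entropy_exp mu n s2 u (fun y => (P y + eps * Q y) * exp (u y))); auto|].
  - intros y. destruct (HD eps He y) as [D [HD1 HD2]]. exists D. split; auto.
    apply Rmult_le_compat_r; auto. left; apply exp_pos.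
  - rewrite (Ex_ext mu _ (fun x => P x * exp (u x) + eps * (Q x * exp (u x)))) by (intros; ring).
    rewrite Ex_plus, Ex_scal. lra.
Qed.

Definition quad_form {V : Banach} n (t : bfamily V) (x : nat -> R) : V :=
  vsum n (fun i => vsum n (fun j => if Nat.ltb i j then vscal (x i * x j) (t i j) else vzero)).
Definition fT_set {V : Banach} n (T : bfamily V -> Prop) x :=
  fun r => exists t, T t /\ r = vnorm (quad_form n t x).
Definition hT_set {V : Banach} n (T : bfamily V -> Prop) (x : nat -> R) :=
  fun r => exists t phi, T t /\ dual_ball phi /\
    r = sqrt (fsum n (fun i => (fsum n (fun j => x j * phi (text t i j)))^2)).
Definition hT {V : Banach} n (T : bfamily V -> Prop) x := Rsup (hT_set n T x).
Definition op_set n (M : nat -> nat -> R) :=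
  fun r => exists u : nat -> R, fsum n (fun j => (u j)^2) <= 1 /\
    r = sqrt (fsum n (fun i => (fsum n (fun j => M i j * u j))^2)).

Lemma fT_eq {V : Banach} n (T : bfamily V -> Prop) x : fT n T x = Rsup (fT_set n T x).
Proof. reflexivity. Qed.
Lemma T1_eq {V : Banach} mu n (T : bfamily V -> Prop) : T1 mu n T = Ex mu (hT n T).
Proof. reflexivity. Qed.

Section DualBall.
Context {V : Banach} (phi : V -> R) (Hphi : dual_ball phi).

Lemma phi_zero : phi vzero = 0.
Proof. pose proof (proj1 Hphi vzero vzero). rewrite vadd_0 in H. lra. Qed.
Lemma phi_vsum n f : phi (vsum n f) = fsum n (fun i => phi (f i)).
Proof.
  induction n; [apply phi_zero|].
  rewrite vsum_S, fsum_S, (proj1 Hphi), IHn. reflexivity.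
Qed.
Lemma phi_le x : phi x <= vnorm x.
Proof. pose proof (proj2 (proj2 Hphi) x). pose proof (Rle_abs (phi x)). lra. Qed.

Lemma phi_quad_form n (t : bfamily V) x :
  phi (quad_form n t x) = fsum n (fun i => fsum n (fun j => if Nat.ltb i j then x i * x j * phi (t i j) else 0)).
Proof.
  unfold quad_form. rewrite phi_vsum. apply fsum_ext; intros i Hi. rewrite phi_vsum.
  apply fsum_ext; intros j Hj. destruct (Nat.ltb i j); [apply (proj1 (proj2 Hphi))|apply phi_zero].
Qed.

Lemma phi_text t i j :
  phi (text t i j) = if Nat.ltb i j then phi (t i j) else if Nat.ltb j i then phi (t j i) else 0.
Proof. unfold text. destruct (Nat.ltb i j); auto. destruct (Nat.ltb j i); auto. apply phi_zero. Qed.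

End DualBall.

Lemma zero_dual (V : Banach) : dual_ball (fun _ : V => 0).
Proof. split; [|split]; intros; try ring. rewrite Rabs_R0. apply vnorm_nonneg. Qed.

Lemma text_sym {V : Banach} (t : bfamily V) i j : text t i j = text t j i.
Proof. unfold text. destruct (Nat.ltb_spec i j), (Nat.ltb_spec j i); auto; lia. Qed.

(* Compact families have uniformly bounded coefficients; this makes all the
   suprema above finite. *)
Definition coef_bound {V : Banach} n (T : bfamily V -> Prop) Kb :=
  0 <= Kb /\ forall t, T t -> forall i j, (i < j)%nat -> (j < n)%nat -> vnorm (t i j) <= Kb.

Lemma fold_Rmax_le l B : 0 <= B -> (forall a, In a l -> a <= B) -> fold_right Rmax 0 l <= B.
Proof.
  induction l; intros HB H; simpl; auto.
  apply Rmax_lub; [apply H; simpl; auto|apply IHl; auto; intros; apply H; simpl; auto].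
Qed.
Lemma fold_Rmax_ge l a : In a l -> a <= fold_right Rmax 0 l.
Proof.
  induction l; intros Ha; [inversion Ha|]. simpl. destruct Ha as [<-|Ha]; [apply Rmax_l|].
  eapply Rle_trans; [apply IHl; auto|apply Rmax_r].
Qed.
Lemma fold_Rmax_nonneg l : 0 <= fold_right Rmax 0 l.
Proof. induction l; simpl; [lra|]. eapply Rle_trans; [apply IHl|apply Rmax_r]. Qed.

Lemma fdist_ge {V : Banach} n (t s : bfamily V) i j : (i < j)%nat -> (j < n)%nat ->
  vnorm (vadd (t i j) (vopp (s i j))) <= fdist n t s.
Proof.
  intros Hij Hjn. apply fold_Rmax_ge, in_flat_map. exists i. split; [apply in_seq; lia|].
  apply in_map_iff. exists j. split; auto. apply in_seq; lia.
Qed.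
Lemma fdist_le {V : Banach} n (t s : bfamily V) B : 0 <= B ->
  (forall i j, (i < j)%nat -> (j < n)%nat -> vnorm (vadd (t i j) (vopp (s i j))) <= B) -> fdist n t s <= B.
Proof.
  intros HB H. apply fold_Rmax_le; auto. intros a Ha.
  apply in_flat_map in Ha. destruct Ha as [i [Hi Ha]]. apply in_map_iff in Ha. destruct Ha as [j [<- Hj]].
  apply in_seq in Hi, Hj. apply H; lia.
Qed.

Lemma fdist_nonneg {V : Banach} n (t s : bfamily V) : 0 <= fdist n t s.
Proof. apply fold_Rmax_nonneg. Qed.

(* Open balls of integer radius around a point cover T; a finite subcover bounds T. *)
Lemma compact_coef_bound {V : Banach} n (T : bfamily V -> Prop) :
  fcompact n T -> (exists t, T t) -> exists Kb, coef_bound n T Kb.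
Proof.
  intros Hc [t0 Ht0].
  destruct (Hc nat (fun k s => fdist n t0 s < INR k)) as [l Hl].
  - intros k t Ht. exists (INR k - fdist n t0 t). split; [lra|].
    intros s Hs. eapply Rle_lt_trans; [|instantiate (1 := fdist n t0 t + fdist n t s); lra].
    apply fdist_le; [apply Rplus_le_le_0_compat; apply fdist_nonneg|].
    intros i j Hij Hjn. eapply Rle_trans; [apply (vnorm_triang_sub _ (t i j))|].
    pose proof (fdist_ge n t0 t i j Hij Hjn). pose proof (fdist_ge n t s i j Hij Hjn). lra.
  - intros t _. destruct (archimed (fdist n t0 t)) as [Hup _].
    pose proof (fdist_nonneg n t0 t).
    assert (Hz : (0 < up (fdist n t0 t))%Z) by (apply lt_0_IZR; lra).
    exists (Z.to_nat (up (fdist n t0 t))). rewrite INR_IZR_INZ, Z2Nat.id by lia. exact Hup.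
  - set (K := fold_right Rmax 0 (map INR l)).
    set (B0 := fdist n t0 (fun _ _ => vzero)).
    exists (B0 + K). split; [pose proof (fold_Rmax_nonneg (map INR l)); pose proof (fdist_nonneg n t0 (fun _ _ => vzero));
      unfold K, B0; lra|].
    intros t Ht i j Hij Hjn.
    destruct (Hl t Ht) as [k [Hk Hkt]].
    assert (INR k <= K) by (apply fold_Rmax_ge, in_map; auto).
    pose proof (fdist_ge n t0 t i j Hij Hjn).
    pose proof (fdist_ge n t0 (fun _ _ => vzero) i j Hij Hjn) as Hz0.
    simpl in Hz0. rewrite vopp_zero, vadd_0r in Hz0.
    pose proof (vnorm_le_sub (t i j) (t0 i j)) as Hs. rewrite vnorm_sub_sym in Hs. unfold B0 in *. lra.
Qed.

Section Suprema.
Context {V : Banach} (n : nat) (T : bfamily V -> Prop) (Kb : R) (HK : coef_bound n T Kb)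
  (Hne : exists t, T t).

Lemma text_bound t i j : T t -> (i < n)%nat -> (j < n)%nat -> vnorm (text t i j) <= Kb.
Proof.
  intros Ht Hi Hj. destruct HK as [HK0 HKt]. unfold text.
  destruct (Nat.ltb_spec i j); [apply HKt; auto|].
  destruct (Nat.ltb_spec j i); [apply HKt; auto|rewrite vnorm_zero; auto].
Qed.

Lemma sq_le_of_sqrt_le q M : 0 <= q -> sqrt q <= M -> q <= M ^ 2.
Proof.
  intros Hq H. rewrite <- (sqrt_sqrt q Hq). pose proof (sqrt_pos q).
  replace (sqrt q * sqrt q) with (sqrt q ^ 2) by ring. apply pow_incr; auto.
Qed.

Lemma sq_le_of_abs a b : Rabs a <= b -> a ^ 2 <= b ^ 2.
Proof. intros H. rewrite <- pow2_abs. pose proof (Rabs_pos a). nra. Qed.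

Lemma fT_set_bound x : bound (fT_set n T x).
Proof.
  destruct HK as [HK0 HKt].
  exists (fsum n (fun i => fsum n (fun j => Rabs (x i) * Rabs (x j) * Kb))).
  intros r [t [Ht ->]]. unfold quad_form. eapply Rle_trans; [apply vnorm_vsum|].
  apply fsum_le; intros i Hi. eapply Rle_trans; [apply vnorm_vsum|]. apply fsum_le; intros j Hj.
  pose proof (Rmult_le_pos _ _ (Rabs_pos (x i)) (Rabs_pos (x j))).
  destruct (Nat.ltb_spec i j); [|rewrite vnorm_zero; apply Rmult_le_pos; auto].
  rewrite vnorm_scal, Rabs_mult. apply Rmult_le_compat_l; auto.
Qed.

Lemma hT_set_bound x : bound (hT_set n T x).
Proof.
  exists (sqrt (fsum n (fun i => (fsum n (fun j => Rabs (x j) * Kb))^2))).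
  intros r [t [phi [Ht [Hphi ->]]]]. apply sqrt_le_1_alt, fsum_le; intros i Hi.
  apply sq_le_of_abs. eapply Rle_trans; [apply fsum_abs|]. apply fsum_le; intros j Hj.
  rewrite Rabs_mult. apply Rmult_le_compat_l; [apply Rabs_pos|].
  eapply Rle_trans; [apply (proj2 (proj2 Hphi))|apply text_bound; auto].
Qed.

Lemma fT_set_ne x : exists r, fT_set n T x r.
Proof. destruct Hne as [t Ht]. eexists. exists t. eauto. Qed.

Lemma hT_set_ne x : exists r, hT_set n T x r.
Proof. destruct Hne as [t Ht]. eexists. exists t, (fun _ => 0). split; [auto|split; [apply zero_dual|reflexivity]]. Qed.

Lemma hT_nonneg x : 0 <= hT n T x.
Proof.
  destruct Hne as [t Ht]. apply Rsup_nonneg; [apply hT_set_bound|].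
  eexists. split; [exists t, (fun _ => 0); repeat split; auto; apply zero_dual|apply sqrt_pos].
Qed.

End Suprema.

Lemma op_set_elem_le n (M B : nat -> nat -> R) u : fsum n (fun j => (u j)^2) <= 1 ->
  (forall i j, (i < n)%nat -> (j < n)%nat -> Rabs (M i j) <= B i j) ->
  sqrt (fsum n (fun i => (fsum n (fun j => M i j * u j))^2)) <= sqrt (fsum n (fun i => (fsum n (fun j => B i j))^2)).
Proof.
  intros Hu HB. apply sqrt_le_1_alt, fsum_le; intros i Hi.
  apply sq_le_of_abs. eapply Rle_trans; [apply fsum_abs|]. apply fsum_le; intros j Hj.
  rewrite Rabs_mult. assert (Rabs (u j) <= 1).
  { assert (u j ^ 2 <= 1).
    { eapply Rle_trans; [|exact Hu]. apply (fsum_single_le n (fun j => u j ^2) j); auto. intros; apply pow2_ge_0. }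
    rewrite <- pow2_abs in H. pose proof (Rabs_pos (u j)). nra. }
  pose proof (HB i j Hi Hj). pose proof (Rabs_pos (M i j)). pose proof (Rabs_pos (u j)). nra.
Qed.

Lemma op_set_ne n M : exists r, op_set n M r.
Proof.
  eexists. exists (fun _ => 0). split; [|reflexivity].
  rewrite (fsum_ext n _ (fun _ => 0)), fsum_const; [lra|intros; simpl; ring].
Qed.

Lemma opnorm_ge n M u : fsum n (fun j => (u j)^2) <= 1 ->
  sqrt (fsum n (fun i => (fsum n (fun j => M i j * u j))^2)) <= opnorm n M.
Proof.
  intros H. apply Rsup_ge; [|exists u; auto].
  exists (sqrt (fsum n (fun i => (fsum n (fun j => Rabs (M i j)))^2))).
  intros r [u' [Hu ->]]. apply op_set_elem_le; auto. intros; lra.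
Qed.

Lemma T2_ge {V : Banach} n (T : bfamily V -> Prop) Kb t phi : coef_bound n T Kb -> T t -> dual_ball phi ->
  opnorm n (fun i j => phi (text t i j)) <= T2 n T.
Proof.
  intros HK Ht Hp. apply Rsup_ge; [|exists t, phi; auto].
  exists (sqrt (fsum n (fun i => (fsum n (fun j => Kb))^2))).
  intros r [t' [phi' [Ht' [Hphi' ->]]]]. apply Rsup_le; [apply op_set_ne|].
  intros r [u [Hu ->]]. apply op_set_elem_le; auto. intros i j Hi Hj.
  eapply Rle_trans; [apply (proj2 (proj2 Hphi'))|apply (text_bound n T); auto].
Qed.

Lemma T2_nonneg {V : Banach} n (T : bfamily V -> Prop) Kb : coef_bound n T Kb -> (exists t, T t) -> 0 <= T2 n T.
Proof.
  intros HK [t Ht]. eapply Rle_trans; [|apply (T2_ge n T Kb t (fun _ => 0)); auto using zero_dual].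
  eapply Rle_trans; [apply sqrt_pos|apply (opnorm_ge n _ (fun _ => 0))].
  rewrite (fsum_ext n _ (fun _ => 0)), fsum_const; [lra|intros; simpl; ring].
Qed.

Definition discrete_grad (n : nat) (w G : (nat -> R) -> R) : Prop :=
  forall y eps, 0 < eps -> exists g : nat -> R, fsum n (fun i => g i ^ 2) <= G y /\
    forall i, (i < n)%nat -> forall y', (forall j, (j < n)%nat -> j <> i -> y' j = y j) ->
      w y' <= w y -> w y - w y' <= (y i - y' i) * g i + eps.

Lemma quad_diff n i0 (x y : nat -> R) (P : nat -> nat -> R) : (i0 < n)%nat ->
  (forall j, (j < n)%nat -> j <> i0 -> y j = x j) ->
  fsum n (fun i => fsum n (fun j => if Nat.ltb i j then x i * x j * P i j else 0)) -
  fsum n (fun i => fsum n (fun j => if Nat.ltb i j then y i * y j * P i j else 0)) =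
  (x i0 - y i0) * fsum n (fun j => x j * (if Nat.ltb i0 j then P i0 j else if Nat.ltb j i0 then P j i0 else 0)).
Proof.
  intros Hi0 Hy. set (d := x i0 - y i0). rewrite <- fsum_minus.
  rewrite (fsum_ext n _ (fun i => fsum n (fun j =>
      (if Nat.eqb i i0 then d * (if Nat.ltb i j then x j * P i j else 0) else 0)
    + (if Nat.eqb j i0 then d * (if Nat.ltb i j then x i * P i j else 0) else 0)))).
  2:{ intros i Hi. rewrite <- fsum_minus. apply fsum_ext; intros j Hj. unfold d.
      destruct (Nat.eqb_spec i i0) as [->|Hne1]; destruct (Nat.eqb_spec j i0) as [->|Hne2].
      - rewrite Nat.ltb_irrefl. ring.
      - rewrite (Hy j) by auto. destruct (Nat.ltb i0 j); ring.
      - rewrite (Hy i) by auto. destruct (Nat.ltb i i0); ring.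
      - rewrite (Hy i), (Hy j) by auto. destruct (Nat.ltb i j); ring. }
  rewrite (fsum_ext n _ (fun i => (if Nat.eqb i i0 then fsum n (fun j => d * (if Nat.ltb i j then x j * P i j else 0)) else 0)
                                + d * (if Nat.ltb i i0 then x i * P i i0 else 0))).
  2:{ intros i Hi. rewrite fsum_plus. f_equal.
      - destruct (Nat.eqb i i0); auto. rewrite fsum_const; ring.
      - apply (fsum_delta n i0 (fun j => d * (if Nat.ltb i j then x i * P i j else 0))); auto. }
  rewrite fsum_plus, (fsum_delta n i0 (fun i => fsum n (fun j => d * (if Nat.ltb i j then x j * P i j else 0)))) by auto.
  rewrite <- fsum_plus, <- fsum_scal. apply fsum_ext; intros j Hj.
  destruct (Nat.ltb_spec i0 j), (Nat.ltb_spec j i0); try lia; ring.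
Qed.

Lemma linear_coord_diff n i (x y u : nat -> R) (P : nat -> nat -> R) : (i < n)%nat ->
  (forall j, (j < n)%nat -> j <> i -> y j = x j) ->
  fsum n (fun k => u k * fsum n (fun j => x j * P k j)) - fsum n (fun k => u k * fsum n (fun j => y j * P k j))
  = (x i - y i) * fsum n (fun k => P k i * u k).
Proof.
  intros Hi Hy. rewrite <- fsum_minus, <- fsum_scal. apply fsum_ext; intros k Hk.
  rewrite <- Rmult_minus_distr_l, <- fsum_minus.
  rewrite (fsum_single n i (fun j => x j * P k j - y j * P k j)); auto; [ring|].
  intros j Hj Hji. rewrite Hy; auto. ring.
Qed.

Section Gradients.
Context {V : Banach} (n : nat) (T : bfamily V -> Prop) (Kb : R) (HK : coef_bound n T Kb)
  (Hne : exists t, T t).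

(* Gradient of f_T: take t almost attaining the sup at y and a norming
   functional phi of Q_t(y); then f_T(y) - f_T(y') <= phi(Q_t(y) - Q_t(y')),
   which is linear in the changed coordinate, with gradient bounded by h(y). *)
Lemma discrete_grad_fT : discrete_grad n (fT n T) (fun y => hT n T y ^ 2).
Proof.
  intros x eps He.
  destruct (Rsup_approx (fT_set n T x) eps (fT_set_bound n T Kb HK x) (fT_set_ne n T Hne x) He)
    as [r [[t [Ht ->]] Hr]].
  destruct (hahn_banach (quad_form n t x)) as [phi [Hphi Hphiv]].
  exists (fun i => fsum n (fun j => x j * phi (text t i j))). split.
  - set (q := fsum n (fun i => (fsum n (fun j => x j * phi (text t i j)))^2)).
    apply sq_le_of_sqrt_le; [apply fsum_nonneg; intros; apply pow2_ge_0|].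
    apply Rsup_ge; [apply (hT_set_bound n T Kb); auto|exists t, phi; auto].
  - intros i Hi y Hy _.
    assert (Hfy : vnorm (quad_form n t y) <= fT n T y)
      by (apply Rsup_ge; [apply (fT_set_bound n T Kb); auto|exists t; auto]).
    pose proof (phi_le phi Hphi (quad_form n t y)).
    assert (E : phi (quad_form n t x) - phi (quad_form n t y) = (x i - y i) * fsum n (fun j => x j * phi (text t i j))).
    { rewrite !phi_quad_form, (quad_diff n i) by auto. f_equal.
      apply fsum_ext; intros j Hj. rewrite phi_text; auto. }
    rewrite !fT_eq in *. lra.
Qed.

(* Gradient of h: with (t, phi) almost attaining the sup at y, w = (sum_j
   y_j phi(t_ij))_i and u = w/|w|, h(y) - h(y') <= <u, w - w'>, which is
   (y_i - y'_i) (phi(t) u)_i, and |phi(t) u| <= T_2. *)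
Lemma discrete_grad_hT : discrete_grad n (hT n T) (fun _ => T2 n T ^ 2).
Proof.
  intros x eps He.
  destruct (Rsup_approx (hT_set n T x) eps (hT_set_bound n T Kb HK x) (hT_set_ne n T Hne x) He)
    as [r0 [[t [phi [Ht [Hphi ->]]]] Hr]].
  fold (hT n T x) in Hr.
  set (w := fun i => fsum n (fun j => x j * phi (text t i j))).
  set (r := sqrt (fsum n (fun i => w i ^ 2))).
  assert (Hr0 : 0 <= r) by apply sqrt_pos.
  assert (Hrr : r ^ 2 = fsum n (fun i => w i ^ 2)).
  { unfold r. simpl. rewrite Rmult_1_r, sqrt_sqrt; auto. apply fsum_nonneg; intros; apply pow2_ge_0. }
  destruct (Rle_lt_or_eq_dec 0 r Hr0) as [Hrp|Hrz].
  2:{ exists (fun _ => 0). split.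
      - rewrite (fsum_ext n _ (fun _ => 0)) by (intros; ring). rewrite fsum_const.
        pose proof (pow2_ge_0 (T2 n T)). lra.
      - intros i Hi y Hy _. pose proof (hT_nonneg n T Kb HK Hne y). unfold r, w in Hrz. rewrite <- Hrz in Hr. lra. }
  set (u := fun k => w k / r).
  set (g := fun i => fsum n (fun j => phi (text t i j) * u j)).
  assert (Hu : fsum n (fun j => u j ^ 2) = 1).
  { unfold u. rewrite (fsum_ext n _ (fun j => / r ^ 2 * w j ^ 2)) by (intros; field; lra).
    rewrite fsum_scal, <- Hrr. field. lra. }
  exists g. split.
  - apply sq_le_of_sqrt_le; [apply fsum_nonneg; intros; apply pow2_ge_0|].
    eapply Rle_trans; [apply (opnorm_ge n (fun i j => phi (text t i j)) u); lra|].
    apply (T2_ge n T Kb); auto.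
  - intros i Hi y Hy _.
    set (w' := fun i => fsum n (fun j => y j * phi (text t i j))).
    assert (Hhy : sqrt (fsum n (fun i => w' i ^ 2)) <= hT n T y)
      by (apply Rsup_ge; [apply (hT_set_bound n T Kb); auto|exists t, phi; auto]).
    assert (HCS : fsum n (fun k => u k * w' k) <= sqrt (fsum n (fun i => w' i ^ 2)))
      by (eapply Rle_trans; [apply fsum_CS_sqrt|rewrite Hu, sqrt_1; lra]).
    assert (Huw : fsum n (fun k => u k * w k) = r).
    { unfold u. rewrite (fsum_ext n _ (fun k => / r * w k ^ 2)) by (intros; field; lra).
      rewrite fsum_scal, <- Hrr. field. lra. }
    assert (Hdiff : fsum n (fun k => u k * w k) - fsum n (fun k => u k * w' k) = (x i - y i) * g i).
    { unfold w, w'. rewrite (linear_coord_diff n i); auto. f_equal.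
      apply fsum_ext; intros k _. rewrite text_sym. reflexivity. }
    unfold r, w in *. lra.
Qed.

End Gradients.

(* Gradient of w^2 for w >= 0: w^2 - w'^2 = (w + w')(w - w') <= 2 w (w - w'). *)
Lemma discrete_grad_sq n (w G : (nat -> R) -> R) :
  (forall y, 0 <= w y) -> discrete_grad n w G ->
  discrete_grad n (fun y => w y ^ 2) (fun y => 4 * w y ^ 2 * G y).
Proof.
  intros Hw HG y eps He.
  pose proof (Hw y) as Hh. set (h := w y) in *.
  destruct (HG y (eps / (2 * h + 1))) as [g [Hg1 Hg2]]; [apply Rdiv_lt_0_compat; lra|].
  exists (fun i => 2 * h * g i). split.
  - rewrite (fsum_ext n _ (fun i => 4 * h ^ 2 * g i ^ 2)) by (intros; ring).
    rewrite fsum_scal. apply Rmult_le_compat_l; auto. pose proof (pow2_ge_0 h). lra.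
  - intros i Hi y' Hy' Hle. pose proof (Hw y') as Hh'. fold h in Hle.
    assert (Hh'h : w y' <= h) by (apply Rnot_lt_le; intro Hc; simpl in Hle; nra).
    pose proof (Hg2 i Hi y' Hy' Hh'h) as Hd. fold h in Hd. cbv beta. fold h.
    assert (E : 2 * h * (eps / (2 * h + 1)) <= eps).
    { replace (2 * h * (eps / (2 * h + 1))) with (eps * (2 * h / (2 * h + 1))) by (field; lra).
      assert (2 * h / (2 * h + 1) <= 1) by (apply Rmult_le_reg_r with (2 * h + 1); [lra|];
        unfold Rdiv; rewrite Rmult_assoc, Rinv_l; lra).
      nra. }
    assert ((h + w y') * (h - w y') <= 2 * h * (h - w y')) by nra.
    assert (2 * h * (h - w y') <= 2 * h * ((y i - y' i) * g i + eps / (2 * h + 1)))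
      by (apply Rmult_le_compat_l; lra).
    replace (h ^ 2 - w y' ^ 2) with ((h + w y') * (h - w y')) by ring. nra.
Qed.

(* Entropy bound from a discrete gradient: with coordinates in [a, b], the
   decrease of lam w along coordinate i is at most lam ((b - a)|g_i| + eps). *)
Lemma ent_exp_discrete_grad mu n a b s2 (w G : (nat -> R) -> R) lam :
  is_prob mu -> (forall xp, In xp mu -> forall i, (i < n)%nat -> a <= fst xp i <= b) -> a <= b ->
  dLSI mu n s2 -> 0 <= s2 -> (forall x, w (trunc n x) = w x) -> discrete_grad n w G -> 0 <= lam ->
  Ent mu (fun x => exp (lam * w x)) <= s2 / 2 * Ex mu (fun x => lam ^ 2 * (b - a) ^ 2 * G x * exp (lam * w x)).
Proof.
  intros Hp Hs Hab HL Hs2 Hw HG Hl.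
  apply (lsi_entropy_exp_approx mu n s2 (fun x => lam * w x) (fun y => lam ^ 2 * (b - a) ^ 2 * G y)
           (fun y => lam ^ 2 * ((b - a) ^ 2 * G y + 2 * INR n))); auto.
  - intros x. rewrite Hw; auto.
  - intros eps He y. destruct (HG y eps (proj1 He)) as [g [Hg1 Hg2]].
    exists (fun i => lam * ((b - a) * Rabs (g i) + eps)). split.
    + assert (Hsq : forall i, (lam * ((b - a) * Rabs (g i) + eps)) ^ 2
                   <= lam ^ 2 * (b - a) ^ 2 * g i ^ 2 + eps * (lam ^ 2 * ((b - a) ^ 2 * g i ^ 2 + 2))).
      { intros i. rewrite <- (pow2_abs (g i)). set (z := (b - a) * Rabs (g i)).
        assert (0 <= z) by (apply Rmult_le_pos; [lra|apply Rabs_pos]).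
        replace ((b - a) ^ 2 * Rabs (g i) ^ 2) with (z ^ 2) by (unfold z; ring).
        replace (lam ^ 2 * (b - a) ^ 2 * Rabs (g i) ^ 2) with (lam ^ 2 * z ^ 2) by (unfold z; ring).
        pose proof (pow2_ge_0 (z - 1)). pose proof (pow2_ge_0 lam). destruct He. nra. }
      eapply Rle_trans; [apply fsum_le; intros i _; apply Hsq|].
      rewrite (fsum_ext n _ (fun i => (lam ^ 2 * (b - a) ^ 2 * (1 + eps)) * g i ^ 2 + eps * lam ^ 2 * 2))
        by (intros; ring).
      rewrite fsum_plus, fsum_scal, fsum_const.
      assert (0 <= lam ^ 2 * (b - a) ^ 2 * (1 + eps))
        by (apply Rmult_le_pos; [apply Rmult_le_pos; apply pow2_ge_0|lra]).
      pose proof (Rmult_le_compat_l _ _ _ H Hg1). nra.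
    + intros [p Hy] i Hi y' [p' Hy'] Hag Hle. rewrite agree_spec in Hag.
      assert (Hd := Hg2 i Hi y' (fun j Hj Hji => eq_sym (Hag j Hj Hji))).
      pose proof (Hs _ Hy i Hi). pose proof (Hs _ Hy' i Hi). simpl in *.
      assert ((y i - y' i) * g i <= (b - a) * Rabs (g i)).
      { eapply Rle_trans; [apply Rle_abs|]. rewrite Rabs_mult.
        apply Rmult_le_compat_r; [apply Rabs_pos|apply Rabs_le; lra]. }
      replace (lam * w y - lam * w y') with (lam * (w y - w y')) by ring.
      destruct (Rle_lt_or_eq_dec 0 lam Hl) as [Hlp|<-]; [|lra].
      apply Rmult_le_compat_l; [lra|]. apply Rle_trans with ((y i - y' i) * g i + eps); [|lra].
      apply Hd. apply (Rmult_le_reg_l lam); lra.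
Qed.

Lemma fT_trunc {V : Banach} n (T : bfamily V -> Prop) x : fT n T (trunc n x) = fT n T x.
Proof.
  rewrite !fT_eq. apply Rsup_ext. intros r. unfold fT_set.
  assert (E : forall t : bfamily V, quad_form n t (trunc n x) = quad_form n t x).
  { intros t. apply vsum_ext; intros i Hi. apply vsum_ext; intros j Hj. unfold trunc.
    destruct (Nat.ltb_spec i n), (Nat.ltb_spec j n); try lia. reflexivity. }
  split; intros [t [Ht Hr]]; exists t; rewrite ?E in *; auto.
Qed.

Lemma hT_trunc {V : Banach} n (T : bfamily V -> Prop) x : hT n T (trunc n x) = hT n T x.
Proof.
  apply Rsup_ext. intros r. unfold hT_set.
  assert (E : forall t (phi : V -> R), fsum n (fun i => (fsum n (fun j => trunc n x j * phi (text t i j)))^2) =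
                                        fsum n (fun i => (fsum n (fun j => x j * phi (text t i j)))^2)).
  { intros t phi. apply fsum_ext; intros i Hi. f_equal. apply fsum_ext; intros j Hj. unfold trunc.
    destruct (Nat.ltb_spec j n); try lia. reflexivity. }
  split; intros [t [phi [Ht [Hp Hr]]]]; exists t, phi; rewrite ?E in *; auto.
Qed.

(* Coquelicot's derivative rules, specialised to real functions so that they
   unify with [Rplus], [Rmult], ... directly. *)
Lemma is_derive_eq (f : R -> R) (x l l' : R) : is_derive f x l -> l = l' -> is_derive f x l'.
Proof. intros H <-; auto. Qed.
Lemma d_plus (f g : R -> R) x a b :
  is_derive f x a -> is_derive g x b -> is_derive (fun t => f t + g t) x (a + b).
Proof. intros H1 H2. exact (is_derive_plus f g x a b H1 H2). Qed.
Lemma d_minus (f g : R -> R) x a b :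
  is_derive f x a -> is_derive g x b -> is_derive (fun t => f t - g t) x (a - b).
Proof. intros H1 H2. exact (is_derive_minus f g x a b H1 H2). Qed.
Lemma d_mult (f g : R -> R) x a b :
  is_derive f x a -> is_derive g x b -> is_derive (fun t => f t * g t) x (a * g x + f x * b).
Proof. intros H1 H2. exact (is_derive_mult f g x a b H1 H2 Rmult_comm). Qed.
Lemma d_inv (f : R -> R) x a : is_derive f x a -> f x <> 0 -> is_derive (fun t => / f t) x (- a / f x ^ 2).
Proof. intros H1 H2. exact (is_derive_inv f x a H1 H2). Qed.
Lemma d_id x : is_derive (fun t : R => t) x 1.
Proof. exact (is_derive_id x). Qed.
Lemma d_const (c : R) x : is_derive (fun _ : R => c) x 0.
Proof. exact (is_derive_const c x). Qed.
Lemma d_scal (f : R -> R) x k a : is_derive f x a -> is_derive (fun t => k * f t) x (k * a).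
Proof. apply is_derive_scal. Qed.
Lemma is_derive_ln_comp (f : R -> R) x a :
  is_derive f x a -> 0 < f x -> is_derive (fun t => ln (f t)) x (a / f x).
Proof.
  intros H1 H2. eapply is_derive_eq; [apply (is_derive_comp ln f x); [apply is_derive_ln; auto|apply H1]|].
  unfold scal; simpl; unfold mult; simpl. unfold Rdiv. ring.
Qed.
Lemma is_derive_exp_comp (f : R -> R) x a :
  is_derive f x a -> is_derive (fun t => exp (f t)) x (a * exp (f x)).
Proof.
  intros H1. eapply is_derive_eq; [apply (is_derive_comp exp f x); [apply is_derive_exp|apply H1]|].
  unfold scal; simpl; unfold mult; simpl. ring.
Qed.

Lemma mgf_derive mu (v : (nat -> R) -> R) l :
  is_derive (fun t => Ex mu (fun x => exp (t * v x))) l (Ex mu (fun x => v x * exp (l * v x))).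
Proof.
  induction mu as [|xp mu IH]; [apply (is_derive_ext (fun _ => 0)); [reflexivity|apply d_const]|].
  apply (is_derive_ext (fun t => snd xp * exp (t * v (fst xp)) + Ex mu (fun x => exp (t * v x))));
    [reflexivity|].
  change (Ex (xp :: mu) (fun x => v x * exp (l * v x))) with
    (snd xp * (v (fst xp) * exp (l * v (fst xp))) + Ex mu (fun x => v x * exp (l * v x))).
  apply d_plus; auto. apply d_scal.
  eapply is_derive_eq; [apply (is_derive_exp_comp (fun t => t * v (fst xp)))|].
  - apply (is_derive_ext (fun t => v (fst xp) * t)); [intros; apply Rmult_comm|].
    apply (d_scal (fun t => t)), d_id.
  - ring.
Qed.

Lemma mgf_pos mu (v : (nat -> R) -> R) l : is_prob mu -> 0 < Ex mu (fun x => exp (l * v x)).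
Proof. intros Hp. apply Ex_pos; auto. intros; apply exp_pos. Qed.

Lemma mgf_at_0 mu (v : (nat -> R) -> R) : is_prob mu -> Ex mu (fun x => exp (0 * v x)) = 1.
Proof. intros Hp. rewrite (Ex_ext mu _ (fun _ => 1)); [apply Ex_const; auto|]. intros; rewrite Rmult_0_l, exp_0; auto. Qed.

Lemma mgf_derive_at_0 mu (v : (nat -> R) -> R) : Ex mu (fun x => v x * exp (0 * v x)) = Ex mu v.
Proof. apply Ex_ext. intros; rewrite Rmult_0_l, exp_0; ring. Qed.

Lemma Ent_exp mu (u : (nat -> R) -> R) :
  Ent mu (fun x => exp (u x)) =
  Ex mu (fun x => u x * exp (u x)) - Ex mu (fun x => exp (u x)) * ln (Ex mu (fun x => exp (u x))).
Proof. unfold Ent. f_equal. apply Ex_ext. intros. rewrite ln_exp. ring. Qed.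

Lemma Ent_exp_mgf mu (v : (nat -> R) -> R) l :
  Ent mu (fun x => exp (l * v x)) =
  l * Ex mu (fun x => v x * exp (l * v x)) - Ex mu (fun x => exp (l * v x)) * ln (Ex mu (fun x => exp (l * v x))).
Proof. rewrite Ent_exp, <- Ex_scal. f_equal. apply Ex_ext. intros; ring. Qed.

(* Entropy duality: E[g e^u] <= Ent(e^u) + E[e^u] ln E[e^g], from the
   pointwise inequality 1 + w <= e^w. *)
Lemma entropy_duality mu (u g : (nat -> R) -> R) : is_prob mu ->
  Ex mu (fun x => g x * exp (u x)) <=
  Ent mu (fun x => exp (u x)) + Ex mu (fun x => exp (u x)) * ln (Ex mu (fun x => exp (g x))).
Proof.
  intros Hp. rewrite Ent_exp.
  set (Z := Ex mu (fun x => exp (u x))). set (S := Ex mu (fun x => exp (g x))).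
  assert (HZ : 0 < Z) by (apply Ex_pos; auto; intros; apply exp_pos).
  assert (HS : 0 < S) by (apply Ex_pos; auto; intros; apply exp_pos).
  assert (H : Ex mu (fun x => (g x - u x + ln Z - ln S) * exp (u x))
              <= Ex mu (fun x => Z / S * exp (g x) - exp (u x))).
  { apply Ex_le; [exact (proj1 Hp)|]. intros xp _.
    set (w := g (fst xp) - u (fst xp) + ln Z - ln S).
    pose proof (exp_ineq1_le w). pose proof (exp_pos (u (fst xp))).
    assert (E : exp w * exp (u (fst xp)) = Z / S * exp (g (fst xp))).
    { rewrite <- exp_plus. unfold w.
      replace (g (fst xp) - u (fst xp) + ln Z - ln S + u (fst xp)) with (g (fst xp) + (ln Z - ln S)) by ring.
      rewrite exp_plus. unfold Rminus. rewrite exp_plus, exp_ln, exp_Ropp, exp_ln; auto. field. lra. }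
    rewrite <- E. nra. }
  rewrite Ex_minus, Ex_scal in H. fold S Z in H.
  rewrite (Ex_ext mu (fun x => (g x - u x + ln Z - ln S) * exp (u x))
     (fun x => (g x * exp (u x) - u x * exp (u x)) + (ln Z - ln S) * exp (u x))) in H by (intros; ring).
  rewrite Ex_plus, Ex_minus, Ex_scal in H. fold Z in H.
  replace (Z / S * S - Z) with 0 in H by (field; lra). lra.
Qed.

(* Let L = ln Z with L(0) = 0, L'(0) = m1, and let psi be
   nonincreasing on (0, lam0] with psi(d) <= L(d)/d for d > 0; then
   psi(lam0) <= m1 (compare psi(lam0) with psi(d) ~ L(d)/d ~ m1 as d -> 0). *)
Lemma psi_le_slope_at_0 (psi psi' L : R -> R) m1 lam0 :
  0 < lam0 -> (forall c, 0 < c -> is_derive psi c (psi' c)) -> (forall c, 0 < c <= lam0 -> psi' c <= 0) ->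
  L 0 = 0 -> is_derive L 0 m1 -> (forall d, 0 < d -> psi d <= L d / d) -> psi lam0 <= m1.
Proof.
  intros Hl Hd Hneg HL0 HL Hpsi.
  apply Rnot_lt_le; intro Hc.
  set (eta := psi lam0 - m1).
  apply is_derive_Reals in HL.
  destruct (HL eta) as [del Hdel]; [unfold eta; lra|].
  set (d := Rmin (del / 2) (lam0 / 2)).
  assert (Hd0 : 0 < d) by (unfold d; apply Rmin_pos; [destruct del; simpl; lra|lra]).
  assert (Hdl : d < lam0) by (unfold d; pose proof (Rmin_r (del/2) (lam0/2)); lra).
  assert (Hdd : Rabs d < del)
    by (rewrite Rabs_pos_eq by lra; unfold d; pose proof (Rmin_l (del/2) (lam0/2)); destruct del; simpl in *; lra).
  specialize (Hdel d (Rgt_not_eq _ _ Hd0) Hdd). rewrite Rplus_0_l, HL0, Rminus_0_r in Hdel.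
  apply Rabs_lt_between in Hdel.
  destruct (MVT_cor2 psi psi' d lam0 Hdl) as [c [Hmvt Hcr]].
  { intros c Hc'. apply is_derive_Reals. apply Hd. lra. }
  assert (psi' c * (lam0 - d) <= 0) by (assert (psi' c <= 0) by (apply Hneg; lra); nra).
  pose proof (Hpsi d Hd0). unfold eta in *. lra.
Qed.

(* Herbst: if Ent(e^{lam Z}) <= K lam^2 E e^{lam Z} for 0 < lam <= Lam, i.e.
   lam Z'(lam) - Z ln Z <= K lam^2 Z, then ln Z(lam) <= lam m1 + K lam^2,
   because (ln Z(lam))/lam - K lam is nonincreasing. *)
Lemma herbst (Z Zd : R -> R) (K Lam m1 : R) :
  (forall l, is_derive Z l (Zd l)) -> (forall l, 0 < Z l) -> Z 0 = 1 -> Zd 0 = m1 -> 0 <= K ->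
  (forall l, 0 < l <= Lam -> l * Zd l - Z l * ln (Z l) <= K * l^2 * Z l) ->
  forall l, 0 <= l <= Lam -> ln (Z l) <= l * m1 + K * l^2.
Proof.
  intros HZ Hpos HZ0 HZd0 HK Hent l [Hl0 HlL].
  destruct (Req_dec l 0) as [->|Hne]; [rewrite HZ0, ln_1; lra|].
  assert (HLd : forall t, is_derive (fun t => ln (Z t)) t (Zd t / Z t))
    by (intros t; apply is_derive_ln_comp; auto).
  assert (H : ln (Z l) * / l - K * l <= m1).
  { apply (psi_le_slope_at_0 (fun t => ln (Z t) * / t - K * t)
      (fun t => (Zd t / Z t) * / t + ln (Z t) * (- (/ t ^ 2)) - K) (fun t => ln (Z t)) m1 l); [lra| | | | |].
    - intros c Hc. eapply is_derive_eq.
      { apply d_minus; [apply d_mult; [apply HLd|apply d_inv; [apply d_id|lra]]|].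
        apply (d_scal (fun t => t)), d_id. }
      simpl. field. split; [lra|]. pose proof (Hpos c); lra.
    - intros c [Hc Hcl]. pose proof (Hpos c). pose proof (Hent c (conj Hc (Rle_trans _ _ _ Hcl HlL))).
      replace (Zd c / Z c * / c + ln (Z c) * - / c ^ 2 - K)
        with ((c * Zd c - Z c * ln (Z c) - K * c^2 * Z c) / (c^2 * Z c)) by (field; lra).
      apply Rmult_le_0_r; [lra|]. left; apply Rinv_0_lt_compat, Rmult_lt_0_compat; nra.
    - rewrite HZ0. apply ln_1.
    - eapply is_derive_eq; [apply HLd|]. rewrite HZ0, HZd0. field.
    - intros d Hd. assert (0 <= K * d) by nra. unfold Rdiv. lra. }
  apply (Rmult_le_compat_r l) in H; [|lra]. field_simplify in H; lra.
Qed.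

(* Variant for nonnegative exponents: if lam Z' - Z ln Z <= a lam^2 Z' on
   (0, Lam] with a Lam < 1 and Z >= 1, then ln Z(lam) (1/lam - a) <= m1,
   since (ln Z(lam)) (1/lam - a) is nonincreasing. *)
Lemma herbst_nonneg (Z Zd : R -> R) (a Lam m1 : R) :
  (forall l, is_derive Z l (Zd l)) -> (forall l, 0 < Z l) -> Z 0 = 1 -> Zd 0 = m1 -> 0 <= a ->
  (forall l, 0 <= l -> 1 <= Z l) ->
  (forall l, 0 < l <= Lam -> l * Zd l - Z l * ln (Z l) <= a * l^2 * Zd l) ->
  forall l, 0 < l <= Lam -> ln (Z l) * (/ l - a) <= m1.
Proof.
  intros HZ Hpos HZ0 HZd0 Ha HZ1 Hent l [Hl HlL].
  assert (HLd : forall t, is_derive (fun t => ln (Z t)) t (Zd t / Z t))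
    by (intros t; apply is_derive_ln_comp; auto).
  apply (psi_le_slope_at_0 (fun t => ln (Z t) * (/ t - a))
    (fun t => (Zd t / Z t) * (/ t - a) + ln (Z t) * (- (/ t ^ 2))) (fun t => ln (Z t)) m1 l Hl).
  - intros c Hc. eapply is_derive_eq.
    { apply d_mult; [apply HLd|].
      apply d_minus; [apply d_inv; [apply d_id|lra]|apply d_const]. }
    simpl. field. split; [lra|]. pose proof (Hpos c); lra.
  - intros c [Hc Hcl]. pose proof (Hpos c). pose proof (Hent c (conj Hc (Rle_trans _ _ _ Hcl HlL))).
    replace (Zd c / Z c * (/ c - a) + ln (Z c) * - / c ^ 2)
      with ((c * Zd c - Z c * ln (Z c) - a * c^2 * Zd c) / (c^2 * Z c)) by (field; lra).
    apply Rmult_le_0_r; [lra|]. left; apply Rinv_0_lt_compat, Rmult_lt_0_compat; nra.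
  - rewrite HZ0. apply ln_1.
  - eapply is_derive_eq; [apply HLd|]. rewrite HZ0, HZd0. field.
  - intros d Hd. assert (0 <= ln (Z d)) by (rewrite <- ln_1; apply ln_le; [lra|apply HZ1; lra]).
    assert (0 <= a * ln (Z d)) by nra.
    replace (ln (Z d) * (/ d - a)) with (ln (Z d) * / d - a * ln (Z d)) by ring. unfold Rdiv. lra.
Qed.

Lemma exp_quad y : 0 <= y -> 1 + y + y^2/2 <= exp y.
Proof.
  intros Hy. destruct (Req_dec y 0) as [->|Hne]; [rewrite exp_0; lra|].
  destruct (MVT_cor2 (fun z => exp z - 1 - z - z^2/2) (fun z => exp z - 1 - z) 0 y) as [c [Hm Hc]]; [lra| |].
  - intros c Hc. apply is_derive_Reals. eapply is_derive_eq.
    + apply d_minus; [apply d_minus; [apply d_minus; [apply (is_derive_exp_comp (fun z => z)), d_id|apply d_const]|apply d_id]|].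
      apply (is_derive_ext (fun z => / 2 * (z * z))); [intros z; unfold Rdiv, pow; rewrite Rmult_1_r; apply Rmult_comm|].
      apply d_scal, d_mult; apply d_id.
    + cbv beta. field.
  - rewrite exp_0 in Hm. pose proof (exp_ineq1_le c).
    assert (0 <= (exp c - 1 - c) * (y - 0)) by (apply Rmult_le_pos; lra). lra.
Qed.

Lemma exp_le_of_ln_le Z r : 0 < Z -> ln Z <= r -> Z <= exp r.
Proof. intros HZ H. rewrite <- (exp_ln Z HZ). apply exp_le_exp; auto. Qed.

Lemma absorb_le E th X : 0 <= th <= 1/2 -> 0 <= X -> E <= th * (E + X) -> E <= 2 * th * X.
Proof.
  intros Hth HX H. destruct (Rle_or_lt E 0) as [HE|HE].
  - assert (0 <= th * X) by (apply Rmult_le_pos; lra). lra.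
  - assert (th * E <= E / 2) by nra. nra.
Qed.

Section Concentration.
Variables (n : nat) (a b s2 : R) (mu : law) (V : Banach) (T : bfamily V -> Prop) (Kb : R).
Hypotheses (Hp : is_prob mu) (Hsupp : forall xp, In xp mu -> forall i, (i < n)%nat -> a <= fst xp i <= b)
  (Hab : a <= b) (HL : dLSI mu n s2) (Hs2 : 0 <= s2) (HK : coef_bound n T Kb) (Hne : exists t, T t).

Local Notation h := (hT n T).
Local Notation f := (fT n T).
Local Notation c := (s2 * (b - a) ^ 2).
Local Notation mgf v l := (Ex mu (fun x => exp (l * v x))).
Local Notation mgf' v l := (Ex mu (fun x => v x * exp (l * v x))).

Let Hw : nonneg_weights mu := proj1 Hp.

Lemma ent_fT l : 0 <= l -> Ent mu (fun x => exp (l * f x)) <= c * l ^ 2 / 2 * Ex mu (fun x => h x ^ 2 * exp (l * f x)).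
Proof.
  intros Hl. eapply Rle_trans.
  - apply (ent_exp_discrete_grad mu n a b s2 f (fun y => h y ^ 2)); auto.
    + apply fT_trunc.
    + apply (discrete_grad_fT n T Kb HK Hne).
  - right. rewrite <- !Ex_scal. apply Ex_ext. intros; field.
Qed.

Lemma ent_hT l : 0 <= l -> Ent mu (fun x => exp (l * h x)) <= c * T2 n T ^ 2 / 2 * l ^ 2 * mgf h l.
Proof.
  intros Hl. eapply Rle_trans.
  - apply (ent_exp_discrete_grad mu n a b s2 h (fun _ => T2 n T ^ 2)); auto.
    + apply hT_trunc.
    + apply (discrete_grad_hT n T Kb HK Hne).
  - right. rewrite <- !Ex_scal. apply Ex_ext. intros; field.
Qed.

Lemma ent_hT_sq m : 0 <= m ->
  Ent mu (fun x => exp (m * h x ^ 2)) <= 2 * (c * T2 n T ^ 2) * m ^ 2 * mgf' (fun x => h x ^ 2) m.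
Proof.
  intros Hm. eapply Rle_trans.
  - apply (ent_exp_discrete_grad mu n a b s2 (fun x => h x ^ 2) (fun y => 4 * h y ^ 2 * T2 n T ^ 2)); auto.
    + intros x. rewrite hT_trunc. reflexivity.
    + apply discrete_grad_sq; [apply (hT_nonneg n T Kb HK Hne)|apply (discrete_grad_hT n T Kb HK Hne)].
  - right. rewrite <- !Ex_scal. apply Ex_ext. intros; field.
Qed.

Lemma mgf_hT_bound l : 0 <= l -> ln (mgf h l) <= l * T1 mu n T + (c * T2 n T ^ 2) / 2 * l ^ 2.
Proof.
  intros Hl. apply (herbst (fun l => mgf h l) (fun l => mgf' h l) _ l); auto; try lra.
  - intros l'. apply mgf_derive.
  - intros l'. apply mgf_pos; auto.
  - apply mgf_at_0; auto.
  - apply mgf_derive_at_0.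
  - assert (0 <= c * T2 n T ^ 2) by (apply Rmult_le_pos; [apply Rmult_le_pos; auto; apply pow2_ge_0|apply pow2_ge_0]). lra.
  - intros l' [Hl' _]. rewrite <- Ent_exp_mgf. eapply Rle_trans; [apply ent_hT; lra|right; ring].
Qed.

Section PositiveScale.
Hypotheses (Hc : 0 < c) (HT2 : 0 < T2 n T).
Local Notation s := (c * T2 n T ^ 2).

Lemma s_pos : 0 < s.
Proof. apply Rmult_lt_0_compat; auto. simpl; nra. Qed.

(* E h^2 <= 2 T_1^2 + 4 s: use h^2 <= 2 T_1^2 + (4/lam^2)(e^{lam (h - T_1)} - 1 - lam (h - T_1))
   with lam^2 = 2/s and the bound E e^{lam (h - T_1)} <= e. *)
Lemma second_moment_hT : Ex mu (fun x => h x ^ 2) <= 2 * T1 mu n T ^ 2 + 4 * s.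
Proof.
  pose proof s_pos as Hs. set (sv := s) in *. set (T1v := T1 mu n T).
  set (l0 := sqrt (2 / sv)).
  assert (Hl0sq : l0 ^ 2 = 2 / sv)
    by (apply pow2_sqrt; left; apply Rdiv_lt_0_compat; lra).
  assert (Hl0 : 0 < l0) by (apply sqrt_lt_R0, Rdiv_lt_0_compat; lra).
  assert (Hk : 4 / l0 ^ 2 = 2 * sv) by (rewrite Hl0sq; field; lra).
  assert (Hpt : forall x, h x ^ 2 <= 2 * T1v ^ 2 + 2 * sv * (exp (l0 * (h x - T1v)) - 1 - l0 * (h x - T1v))).
  { intros x. pose proof (hT_nonneg n T Kb HK Hne x) as Hh.
    set (y := l0 * (h x - T1v)). pose proof (exp_ineq1_le y).
    destruct (Rle_or_lt (h x) T1v) as [Hle|Hgt].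
    - assert (h x ^ 2 <= T1v ^ 2) by (simpl; nra). pose proof (pow2_ge_0 T1v). nra.
    - assert (Hy : 0 <= y) by (unfold y; apply Rmult_le_pos; lra).
      pose proof (exp_quad y Hy).
      assert (2 * sv * (y ^ 2 / 2) = 2 * (h x - T1v) ^ 2) by (rewrite <- Hk; unfold y; field; lra).
      pose proof (pow2_ge_0 (h x - 2 * T1v)). simpl in *. nra. }
  assert (HEx : Ex mu (fun x => h x ^ 2)
      <= 2 * T1v ^ 2 + 2 * sv * (Ex mu (fun x => exp (l0 * (h x - T1v))) - 1 - l0 * (Ex mu h - T1v))).
  { eapply Rle_trans; [apply (Ex_le mu _ (fun x => 2 * T1v ^ 2 + 2 * sv * (exp (l0 * (h x - T1v)) - 1 - l0 * (h x - T1v))) Hw); intros xp _; apply Hpt|].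
    right. rewrite Ex_plus, Ex_const, Ex_scal, !Ex_minus, Ex_const, Ex_scal, Ex_minus, Ex_const by auto. ring. }
  rewrite <- T1_eq, Rminus_diag, Rmult_0_r in HEx.
  assert (HZ : Ex mu (fun x => exp (l0 * (h x - T1v))) <= exp 1).
  { rewrite (Ex_ext mu _ (fun x => exp (- (l0 * T1v)) * exp (l0 * h x)))
      by (intros; rewrite <- exp_plus; f_equal; ring).
    rewrite Ex_scal. replace 1 with (- (l0 * T1v) + (l0 * T1v + sv / 2 * l0 ^ 2)) by (rewrite Hl0sq; field; lra).
    rewrite exp_plus. apply Rmult_le_compat_l; [left; apply exp_pos|].
    apply exp_le_of_ln_le; [apply mgf_pos; auto|apply mgf_hT_bound; lra]. }
  pose proof exp_le_3. nra.
Qed.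

Lemma mgf_hT_sq_bound : ln (mgf (fun x => h x ^ 2) (/ (4 * s))) <= Ex mu (fun x => h x ^ 2) / (2 * s).
Proof.
  pose proof s_pos as Hs. set (sv := s) in *.
  assert (HZ1 : forall l, 0 <= l -> 1 <= mgf (fun x => h x ^ 2) l).
  { intros l Hl. rewrite <- (Ex_const mu 1 Hp). apply Ex_le; auto. intros xp _.
    rewrite <- exp_0. apply exp_le_exp, Rmult_le_pos; auto. apply pow2_ge_0. }
  assert (Hq : ln (mgf (fun x => h x ^ 2) (/ (4 * sv))) * (/ / (4 * sv) - 2 * sv) <= Ex mu (fun x => h x ^ 2)).
  { apply (herbst_nonneg (fun l => mgf (fun x => h x ^ 2) l) (fun l => mgf' (fun x => h x ^ 2) l) (2 * sv) (/ (4 * sv)));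
      auto; try lra.
    - intros l. apply (mgf_derive mu (fun x => h x ^ 2)).
    - intros l. apply mgf_pos; auto.
    - apply (mgf_at_0 mu (fun x => h x ^ 2) Hp).
    - apply (mgf_derive_at_0 mu (fun x => h x ^ 2)).
    - intros l [Hl _]. rewrite <- (Ent_exp_mgf mu (fun x => h x ^ 2)). apply ent_hT_sq. lra.
    - split; [apply Rinv_0_lt_compat|]; lra. }
  replace (/ / (4 * sv) - 2 * sv) with (2 * sv) in Hq by (field; lra).
  apply (Rmult_le_reg_r (2 * sv)); [lra|]. unfold Rdiv. rewrite Rmult_assoc, Rinv_l; lra.
Qed.

(* For lam <= 1/(2 c T_2), Ent(e^{lam f}) <= 2 c E[h^2] lam^2 E e^{lam f}: the
   factor E[h^2 e^{lam f}] in [ent_fT] is controlled by entropy duality with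
   g = h^2/(4s), and the resulting multiple of Ent(e^{lam f}) is absorbed. *)
Lemma ent_fT_bound l : 0 < l <= / (2 * c * T2 n T) ->
  Ent mu (fun x => exp (l * f x)) <= 2 * c * Ex mu (fun x => h x ^ 2) * l ^ 2 * mgf f l.
Proof.
  intros [Hl1 Hl2]. pose proof s_pos as Hs. set (sv := s) in *.
  set (Eh2 := Ex mu (fun x => h x ^ 2)). set (En := Ent mu (fun x => exp (l * f x))).
  set (Zf := mgf f l). set (A := Ex mu (fun x => h x ^ 2 * exp (l * f x))).
  set (Lq := ln (mgf (fun x => h x ^ 2) (/ (4 * sv)))).
  assert (HZf : 0 < Zf) by (apply mgf_pos; auto).
  assert (HA : En <= c * l ^ 2 / 2 * A) by (apply ent_fT; lra).
  assert (Hdual : A <= 4 * sv * (En + Zf * Lq)).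
  { pose proof (entropy_duality mu (fun x => l * f x) (fun x => / (4 * sv) * h x ^ 2) Hp) as Hd.
    rewrite (Ex_ext mu _ (fun x => / (4 * sv) * (h x ^ 2 * exp (l * f x)))), Ex_scal in Hd by (intros; ring).
    apply (Rmult_le_compat_l (4 * sv)) in Hd; [|lra].
    rewrite <- Rmult_assoc, Rinv_r, Rmult_1_l in Hd by lra. exact Hd. }
  set (th := 2 * c * sv * l ^ 2).
  assert (Hth : th <= 1 / 2).
  { assert (Hl : l * (2 * c * T2 n T) <= 1).
    { apply (Rmult_le_compat_r (2 * c * T2 n T)) in Hl2; [|nra]. rewrite Rinv_l in Hl2 by nra. lra. }
    assert (0 <= l * (2 * c * T2 n T)) by (apply Rmult_le_pos; nra).
    unfold th. replace (2 * c * sv * l ^ 2) with ((l * (2 * c * T2 n T)) ^ 2 / 2) by (unfold sv; field).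
    assert ((l * (2 * c * T2 n T)) ^ 2 <= 1) by (rewrite <- (pow1 2); apply pow_incr; lra). lra. }
  assert (Hth0 : 0 <= th)
    by (unfold th; apply Rmult_le_pos; [apply Rmult_le_pos|apply pow2_ge_0]; lra).
  assert (HLq0 : 0 <= Lq).
  { rewrite <- ln_1. apply ln_le; [lra|]. rewrite <- (Ex_const mu 1 Hp). apply Ex_le; auto. intros xp _.
    rewrite <- exp_0. apply exp_le_exp, Rmult_le_pos; [left; apply Rinv_0_lt_compat; lra|apply pow2_ge_0]. }
  assert (HLq : Lq <= Eh2 / (2 * sv)) by apply mgf_hT_sq_bound.
  assert (HE : En <= th * (En + Zf * Lq)).
  { eapply Rle_trans; [exact HA|].
    replace (th * (En + Zf * Lq)) with (c * l ^ 2 / 2 * (4 * sv * (En + Zf * Lq))) by (unfold th; field).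
    apply Rmult_le_compat_l; [|exact Hdual].
    apply Rmult_le_pos; [apply Rmult_le_pos; [lra|apply pow2_ge_0]|lra]. }
  assert (HZL : Zf * Lq <= Zf * (Eh2 / (2 * sv))) by (apply Rmult_le_compat_l; lra).
  assert (En <= 2 * th * (Zf * Lq)) by (apply absorb_le; auto; apply Rmult_le_pos; lra).
  assert (2 * th * (Zf * (Eh2 / (2 * sv))) = 2 * c * Eh2 * l ^ 2 * Zf) by (unfold th; field; lra).
  nra.
Qed.

Lemma mgf_fT_bound l : 0 <= l <= / (2 * c * T2 n T) ->
  ln (mgf f l) <= l * Ex mu f + 2 * c * Ex mu (fun x => h x ^ 2) * l ^ 2.
Proof.
  apply (herbst (fun l => mgf f l) (fun l => mgf' f l)).
  - intros l'. apply mgf_derive.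
  - intros l'. apply mgf_pos; auto.
  - apply mgf_at_0; auto.
  - apply mgf_derive_at_0.
  - apply Rmult_le_pos; [lra|apply Ex_nonneg; auto; intros; apply pow2_ge_0].
  - intros l' Hl'. rewrite <- Ent_exp_mgf. apply ent_fT_bound; auto.
Qed.

Lemma tail_fT_exp t l : 0 <= l <= / (2 * c * T2 n T) ->
  Pr mu (fun x => f x - Ex mu f >= t) <= exp (2 * c * Ex mu (fun x => h x ^ 2) * l ^ 2 - l * t).
Proof.
  intros Hl. eapply Rle_trans; [apply (chernoff mu (fun x => f x - Ex mu f)); [exact Hw|apply Hl]|].
  rewrite (Ex_ext mu _ (fun x => exp (- (l * (Ex mu f + t))) * exp (l * f x)))
    by (intros; rewrite <- exp_plus; f_equal; ring).
  rewrite Ex_scal.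
  replace (2 * c * Ex mu (fun x => h x ^ 2) * l ^ 2 - l * t)
    with (- (l * (Ex mu f + t)) + (l * Ex mu f + 2 * c * Ex mu (fun x => h x ^ 2) * l ^ 2)) by ring.
  rewrite exp_plus. apply Rmult_le_compat_l; [left; apply exp_pos|].
  apply exp_le_of_ln_le; [apply mgf_pos; auto|apply mgf_fT_bound; auto].
Qed.

End PositiveScale.
End Concentration.

Lemma two_exp_bound P E : P <= 1 -> E <= 1/2 -> P <= 2 * exp (- E).
Proof. intros HP HE. pose proof (exp_ineq1_le (- E)). lra. Qed.

Lemma exp_bound_mono P x E : x <= - E -> P <= exp x -> P <= 2 * exp (- E).
Proof. intros Hx HP. pose proof (exp_le_exp _ _ Hx). pose proof (exp_pos (- E)). lra. Qed.

Lemma le_div x y z : 0 < z -> x * z <= y -> x <= y / z.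
Proof. intros Hz H. apply (Rmult_le_reg_r z); auto. unfold Rdiv. rewrite Rmult_assoc, Rinv_l, Rmult_1_r; lra. Qed.
Lemma div_le x y z : 0 < z -> x <= y * z -> x / z <= y.
Proof. intros Hz H. apply (Rmult_le_reg_r z); auto. unfold Rdiv. rewrite Rmult_assoc, Rinv_l, Rmult_1_r; lra. Qed.

Lemma div_le_div_l x y z : 0 <= x -> 0 < y -> y <= z -> x / z <= x / y.
Proof. intros Hx Hy Hyz. unfold Rdiv. apply Rmult_le_compat_l; auto. apply Rinv_le_contravar; auto. Qed.

(* The regime lam = t/(2K), where the tail bound is e^{-t^2/(4K)}. *)
Lemma tail_quadratic_regime (c T1 T2 K t P E : R) : 0 < c -> 0 < T1 -> 0 < T2 -> 0 < t -> 0 < K ->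
  K <= 4 * c * T1^2 + 8 * c^2 * T2^2 -> P <= 1 ->
  E <= t^2 / (60 * c * T1^2) -> E <= t / (60 * c * T2) -> P <= exp (- (t^2 / (4 * K))) ->
  P <= 2 * exp (- E).
Proof.
  intros Hc HT1 HT2 Ht HK0 HK HP HE1 HE2 Hl.
  destruct (Rle_or_lt (8 * c^2 * T2^2) (4 * c * T1^2)) as [Ha|Hb].
  - apply (exp_bound_mono P (- (t^2 / (4 * K)))); auto.
    assert (t ^ 2 / (60 * c * T1 ^ 2) <= t ^ 2 / (4 * K)) by (apply div_le_div_l; nra).
    lra.
  - destruct (Rle_or_lt (16 / 15 * c * T2) t) as [Ht2|Ht2].
    + apply (exp_bound_mono P (- (t^2 / (4 * K)))); auto.
      assert (t ^ 2 / (64 * c^2 * T2 ^ 2) <= t ^ 2 / (4 * K)) by (apply div_le_div_l; nra).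
      assert (t / (60 * c * T2) <= t ^ 2 / (64 * c^2 * T2 ^ 2)).
      { replace (t ^ 2 / (64 * c^2 * T2 ^ 2)) with ((t / (60 * c * T2)) * (60 * t / (64 * c * T2)))
          by (field; lra).
        assert (1 <= 60 * t / (64 * c * T2)) by (apply le_div; nra).
        assert (0 <= t / (60 * c * T2)) by (left; apply Rdiv_lt_0_compat; nra).
        nra. }
      lra.
    + apply two_exp_bound; auto.
      assert (t / (60 * c * T2) <= 1 / 2) by (apply div_le; nra).
      lra.
Qed.

(* Write E = min(t^2/T_1^2, t/T_2) / (60 c); a tail
   bound P <= exp(K lam^2 - lam t) on [0, 1/(2 c T_2)], with
   K <= 4 c T_1^2 + 8 c^2 T_2^2, gives P <= 2 e^{-E}.  If t >= 2 K Lam take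
   lam = Lam; otherwise take lam = t/(2K), which gives e^{-t^2/(4K)}; in the
   remaining regime t < 16/15 c T_2 we have E <= 1/2 and P <= 1 suffices. *)
Lemma tail_from_mgf_bound (c T1 T2 K t P : R) : 0 < c -> 0 < T1 -> 0 < T2 -> 0 < t -> 0 <= K ->
  K <= 4 * c * T1^2 + 8 * c^2 * T2^2 -> P <= 1 ->
  (forall l, 0 <= l <= / (2 * c * T2) -> P <= exp (K * l^2 - l * t)) ->
  P <= 2 * exp (- (1 / (60 * c)) * Rmin (t^2 / T1^2) (t / T2)).
Proof.
  intros Hc HT1 HT2 Ht HK0 HK HP Hl.
  set (E := 1 / (60 * c) * Rmin (t ^ 2 / T1 ^ 2) (t / T2)).
  replace (- (1 / (60 * c)) * Rmin (t ^ 2 / T1 ^ 2) (t / T2)) with (- E) by (unfold E; ring).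
  assert (HE1 : E <= t^2 / (60 * c * T1^2)).
  { unfold E. replace (t ^ 2 / (60 * c * T1 ^ 2)) with (1 / (60 * c) * (t^2 / T1^2)) by (field; lra).
    apply Rmult_le_compat_l; [left; apply Rdiv_lt_0_compat; lra|apply Rmin_l]. }
  assert (HE2 : E <= t / (60 * c * T2)).
  { unfold E. replace (t / (60 * c * T2)) with (1 / (60 * c) * (t / T2)) by (field; lra).
    apply Rmult_le_compat_l; [left; apply Rdiv_lt_0_compat; lra|apply Rmin_r]. }
  set (Lam := / (2 * c * T2)) in *.
  assert (HLam : 0 < Lam) by (apply Rinv_0_lt_compat; nra).
  destruct (Rle_or_lt (2 * K * Lam) t) as [Hbig|Hsmall].
  - apply (exp_bound_mono P (K * Lam^2 - Lam * t)); [|apply Hl; lra].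
    assert (K * Lam ^ 2 <= Lam * t / 2) by (simpl; nra).
    assert (Lam * t / 2 = t / (4 * c * T2)) by (unfold Lam; field; lra).
    assert (t / (60 * c * T2) <= t / (4 * c * T2)) by (apply div_le_div_l; nra).
    lra.
  - assert (HKp : 0 < K) by (destruct (Req_dec K 0) as [->|]; lra).
    set (l := t / (2 * K)).
    assert (Hl0 : 0 <= l <= Lam).
    { split; [left; apply Rdiv_lt_0_compat; lra|].
      apply div_le; lra. }
    assert (Hx : K * l ^ 2 - l * t = - (t^2 / (4 * K))) by (unfold l; field; lra).
    apply (tail_quadratic_regime c T1 T2 K t); auto. rewrite <- Hx. apply Hl; auto.
Qed.

Lemma div_nonneg x y : 0 <= x -> 0 <= y -> 0 <= x / y.
Proof.
  intros Hx Hy. destruct (Req_dec y 0) as [->|Hy0]; [unfold Rdiv; rewrite Rinv_0; lra|].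
  apply Rmult_le_pos; auto. left; apply Rinv_0_lt_compat; lra.
Qed.

(* If c, T_1, T_2 or t vanishes, the exponent is 0 (as x / 0 = 0) and the bound is trivial. *)
Lemma tail_degenerate (c T1 T2 t P : R) : 0 <= c -> 0 <= T1 -> 0 <= T2 -> 0 <= t -> P <= 1 ->
  ~ (0 < c /\ 0 < T1 /\ 0 < T2 /\ 0 < t) ->
  P <= 2 * exp (- (1 / (60 * c)) * Rmin (t^2 / T1^2) (t / T2)).
Proof.
  intros Hc HT1 HT2 Ht HP Hdeg.
  assert (Hdiv0 : forall x, x / 0 = 0) by (intros; unfold Rdiv; rewrite Rinv_0; ring).
  assert (Hq1 : 0 <= t ^ 2 / T1 ^ 2) by (apply div_nonneg; apply pow2_ge_0).
  assert (Hz : 1 / (60 * c) * Rmin (t ^ 2 / T1 ^ 2) (t / T2) = 0).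
  { destruct (Req_dec c 0) as [->|Hc0]; [rewrite Rmult_0_r, Hdiv0; ring|].
    destruct (Req_dec t 0) as [->|Ht0].
    { unfold Rdiv. rewrite pow_i, !Rmult_0_l, Rmin_left; [ring|lra|lia]. }
    destruct (Req_dec T1 0) as [->|HT10].
    { rewrite pow_i, Hdiv0, Rmin_left; [ring| |lia]. apply div_nonneg; lra. }
    destruct (Req_dec T2 0) as [->|HT20]; [rewrite Hdiv0, Rmin_right; [ring|lra]|].
    exfalso. apply Hdeg. repeat split; lra. }
  replace (- (1 / (60 * c)) * Rmin (t ^ 2 / T1 ^ 2) (t / T2)) with (- 0) by (rewrite <- Hz; ring).
  apply two_exp_bound; lra.
Qed.

Theorem corollary2p2 (n : nat) (a b sigma : R) (mu : law) (V : Banach)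
  (T : bfamily V -> Prop) :
  a < b ->
  is_prob mu ->
  (forall xp, In xp mu -> forall i, (i < n)%nat -> a <= fst xp i <= b) ->
  dLSI mu n (sigma ^ 2) ->
  fcompact n T ->
  (exists t, T t) ->
  forall t : R, 0 <= t ->
    Pr mu (fun x => fT n T x - Ex mu (fT n T) >= t)
      <= 2 * exp (- (1 / (60 * (b - a) ^ 2 * sigma ^ 2))
                   * Rmin (t ^ 2 / (T1 mu n T) ^ 2) (t / T2 n T)).
Proof.
  intros Hab Hp Hsupp HL Hcomp Hne t Ht.
  destruct (compact_coef_bound n T Hcomp Hne) as [Kb HK].
  assert (Hs2 : 0 <= sigma ^ 2) by apply pow2_ge_0.
  replace (60 * (b - a) ^ 2 * sigma ^ 2) with (60 * (sigma ^ 2 * (b - a) ^ 2)) by ring.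
  pose proof (Pr_le_1 mu (fun x => fT n T x - Ex mu (fT n T) >= t) Hp) as HP1.
  assert (HT1 : 0 <= T1 mu n T) by (apply Ex_nonneg; [exact (proj1 Hp)|intros; apply (hT_nonneg n T Kb HK Hne)]).
  pose proof (T2_nonneg n T Kb HK Hne) as HT2.
  assert (Hc : 0 <= sigma ^ 2 * (b - a) ^ 2) by (apply Rmult_le_pos; [|apply pow2_ge_0]; auto).
  destruct (classic (0 < sigma ^ 2 * (b - a) ^ 2 /\ 0 < T1 mu n T /\ 0 < T2 n T /\ 0 < t))
    as [[Hc0 [HT10 [HT20 Ht0]]]|Hdeg]; [|apply tail_degenerate; auto].
  apply (tail_from_mgf_bound _ _ _ (2 * (sigma ^ 2 * (b - a) ^ 2) * Ex mu (fun x => hT n T x ^ 2))); auto.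
  - apply Rmult_le_pos; [lra|apply Ex_nonneg; [exact (proj1 Hp)|intros; apply pow2_ge_0]].
  - pose proof (second_moment_hT n a b (sigma ^ 2) mu V T Kb Hp Hsupp (Rlt_le _ _ Hab) HL Hs2 HK Hne Hc0 HT20).
    nra.
  - intros l Hl. apply (tail_fT_exp n a b (sigma ^ 2) mu V T Kb); auto; lra.
Qed.
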